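(* Let $P,Q$ be Bio$\beta$ systems and $S,T$ Bio$\beta$ membranes with $P\equiv Q$ and $S\equiv T$. Then for all $\Gamma_1,\Gamma_2,\tau$: $\Gamma_1;\Gamma_2\vdash P:\tau$ if and only if $\Gamma_1;\Gamma_2\vdash Q:\tau$; and for all $\Delta_1,\Delta_2,\sigma$: $\Delta_1;\Delta_2\vdash S:\sigma$ if and only if $\Delta_1;\Delta_2\vdash T:\sigma$.
   Context: Bio$\beta$ syntax. Fix a protein signature: a finite set $\mathcal P=\mathcal P_p\cup\mathcal P_{ap}$ of protein names, partitioned into polar proteins $\mathcal P_p$ and apolar proteins $\mathcal P_{ap}$, with $s:\mathcal P\to\mathbb N$ giving the number of sites of each protein; fix a countably infinite set $\mathcal N$ of names. An interface is a finite map $\rho$ from sites (natural numbers) to $\mathcal N\cup\{h,v\}$ (visible $v$, hidden $h$, or tied to a name), written as a sum, e.g. $\rho=1+\bar2+3^x$ means $\rho(1)=v,\rho(2)=h,\rho(3)=x$. Let $fn(\rho)=\mathrm{im}(\rho)\cap\mathcal N$ and $|\rho,x|=|\{i:\rho(i)=x\}|$. Systems and membranes: $P::=\diamond\mid A_p(\rho)\mid [S]\{P\}\mid P*Q\mid \nu n.P\mid \mathsf p_n;P\mid \mathsf f_n;[S]\{P\}$ ($A_p\in\mathcal P_p$), $S::=\mathbf 0\mid A_{ap}(\rho)\mid S\star T\mid \mathsf p^\perp_n;S\mid \mathsf f^\perp_n$ ($A_{ap}\in\mathcal P_{ap}$), with $[S]\{P\}$ a compartment with membrane $S$ enclosing $P$,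 $\nu n$ a binder, and $\mathsf p_n,\mathsf p^\perp_n,\mathsf f_n,\mathsf f^\perp_n$ pinch/co-pinch/fuse/co-fuse actions. $fn(\cdot)$ is as usual (including subscripts of actions). $\mathrm{Act}=\{\mathsf p_n,\mathsf p^\perp_n,\mathsf f_n,\mathsf f^\perp_n\mid n\in\mathcal N\}$ with involution $(t_n)^\perp=t^\perp_n$, extended to sets pointwise; for $X\subseteq\mathcal N$, $\tau\restriction X=\{t_x\in\tau\mid x\in X\}$. $act(K)$, the set of actions occurring in $K$, is defined by: $\emptyset$ for $\diamond,\mathbf 0$, proteins; union over compartments and compositions; $act(\nu n.P)=act(P)$; $act(t_n;K)=\{t_n\}\cup act(K)$; $act(\mathsf f^\perp_n)=\{\mathsf f^\perp_n\}$. Structural equivalence $\equiv$ is the least equivalence containing $\alpha$-equivalence such that: $*$ and $\star$ are commutative and associative with units $\diamond$ and $\mathbf 0$; $\nu n.\nu m.P\equiv\nu m.\nu n.P$ ($n\ne m$); $\nu n.\diamond\equiv\diamond$; $\nu n.(P*Q)\equiv(\nu n.P)*Q$ if $n\notin fn(Q)$; $\nu n.[S]\{P\}\equiv[S]\{\nu n.P\}$ if $n\notin fn(S)$; $\nu n.(t_m;P)\equiv t_m;\nu n.P$ for $t\in\{\mathsf p,\mathsf f\}$, $n\neq m$; and $\equiv$ is preserved by $*$, $\star$, compartment formation, and prefixes $t_n;-$ for $t\in\{\mathsf p,\mathsf p^\perp,\mathsf f\}$. Type system. A type $\tau$ is a finite subset of $\mathrm{Act}$. Judgements have the form $\Gamma_1;\Gamma_2\vdash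 K:\tau$ with $\Gamma_1,\Gamma_2$ disjoint finite sets of names (a comma denotes disjoint union). Let $ok_e(\Gamma_1,\Gamma_2,\Delta_1,\Delta_2)$ iff $(\Gamma_1\cup\Gamma_2)\cap(\Delta_1\cup\Delta_2)=\emptyset$, and $ok_t(\Gamma,\tau,\sigma)$ iff $(\tau\restriction\Gamma)^\perp=\sigma\restriction\Gamma$. Rules: (empty) $\emptyset;\emptyset\vdash\diamond:\emptyset$ and $\emptyset;\emptyset\vdash\mathbf 0:\emptyset$. (prot) if $|\rho,x|\le2$ for all $x\in fn(\rho)$, then $\{x:|\rho,x|=1\};\{x:|\rho,x|=2\}\vdash A(\rho):\emptyset$. (action) for $t\in\{\mathsf p,\mathsf p^\perp,\mathsf f\}$, if $\Gamma_1;\Gamma_2\vdash K:\emptyset$ and $act(K)=\emptyset$ then $\Gamma_1,x;\Gamma_2\vdash t_x;K:\{t_x\}$. (co-f) $x;\emptyset\vdash\mathsf f^\perp_x:\{\mathsf f^\perp_x\}$. ($\nu$-prot) if $\Gamma_1;\Gamma_2\vdash P:\tau$, $x\notin\Gamma_1$, $\tau\restriction\{x\}=\emptyset$, then $\Gamma_1;\Gamma_2\setminus\{x\}\vdash\nu x.P:\tau$. ($\nu$-action) for $t\in\{\mathsf p,\mathsf f\}$, if $\Gamma_1;\Gamma_2,x\vdash P:\tau\cup\{t_x,t_x^\perp\}$ and $\{t_x,t^\perp_x\}\cap\tau=\emptyset$ then $\Gamma_1;\Gamma_2\vdash\nu x.P:\tau$. (par) for $op\in\{*,\star\}$, if $\Gamma_1,\Gamma;\Gamma_2\vdash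 K:\tau$, $\Delta_1,\Gamma;\Delta_2\vdash L:\sigma$, $ok_e(\Gamma_1,\Gamma_2,\Delta_1,\Delta_2)$ and $ok_t(\Gamma,\tau,\sigma)$, then $\Gamma_1,\Delta_1;\Gamma_2,\Delta_2,\Gamma\vdash K\,op\,L:\tau\cup\sigma$. (cell) if $\Gamma_1,\Gamma;\Gamma_2\vdash S:\tau$, $\Gamma;\Delta_2\vdash P:\sigma$, $ok_e(\Gamma_1,\Gamma_2,\emptyset,\Delta_2)$ and $ok_t(\Gamma,\tau,\sigma)$, then $\Gamma_1;\Gamma_2,\Delta_2,\Gamma\vdash[S]\{P\}:\tau\cup\sigma$. *)

From Stdlib Require Import List Arith.
Import ListNotations.

Inductive ival : Type := IV (* visible *) | IH (* hidden *) | IN (n : nat).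

(* An interface is a finite map from sites to N u {h,v}; site i is mapped to
   the i-th entry of the list (None = site not in the domain). *)
Definition iface := list (option ival).

Definition ifc_count (r : iface) (x : nat) : nat :=
  length (filter (fun o => match o with Some (IN y) => Nat.eqb y x | _ => false end) r).

Definition ifc_fn (r : iface) (x : nat) : Prop := In (Some (IN x)) r.

Definition swapn (a b x : nat) : nat :=
  if Nat.eqb x a then b else if Nat.eqb x b then a else x.
Definition swap_ival (a b : nat) (v : ival) : ival :=
  match v with IN n => IN (swapn a b n) | _ => v end.
Definition swap_iface (a b : nat) (r : iface) : iface :=
  map (option_map (swap_ival a b)) r.

(* Pp : polar protein names, Pap : apolar protein names. *)
Inductive mem (Pap : Type) : Type :=
| MNil
| MProt (A : Pap) (r : iface)
| MPar (S T : mem Pap)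
| MCoPinch (n : nat) (S : mem Pap)
| MCoFuse (n : nat).
Arguments MNil {Pap}.
Arguments MProt {Pap} A r.
Arguments MPar {Pap} S T.
Arguments MCoPinch {Pap} n S.
Arguments MCoFuse {Pap} n.

Inductive sys (Pp Pap : Type) : Type :=
| SNil
| SProt (A : Pp) (r : iface)
| SComp (S : mem Pap) (P : sys Pp Pap)
| SPar (P Q : sys Pp Pap)
| SNu (n : nat) (P : sys Pp Pap)
| SPinch (n : nat) (P : sys Pp Pap)
| SFuse (n : nat) (S : mem Pap) (P : sys Pp Pap).
Arguments SNil {Pp Pap}.
Arguments SProt {Pp Pap} A r.
Arguments SComp {Pp Pap} S P.
Arguments SPar {Pp Pap} P Q.
Arguments SNu {Pp Pap} n P.
Arguments SPinch {Pp Pap} n P.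
Arguments SFuse {Pp Pap} n S P.

Fixpoint mem_fn {Pap} (S : mem Pap) (x : nat) : Prop :=
  match S with
  | MNil => False
  | MProt _ r => ifc_fn r x
  | MPar S1 S2 => mem_fn S1 x \/ mem_fn S2 x
  | MCoPinch n S1 => x = n \/ mem_fn S1 x
  | MCoFuse n => x = n
  end.

Fixpoint sys_fn {Pp Pap} (P : sys Pp Pap) (x : nat) : Prop :=
  match P with
  | SNil => False
  | SProt _ r => ifc_fn r x
  | SComp M Q => mem_fn M x \/ sys_fn Q x
  | SPar P1 P2 => sys_fn P1 x \/ sys_fn P2 x
  | SNu n Q => x <> n /\ sys_fn Q x
  | SPinch n Q => x = n \/ sys_fn Q x
  | SFuse n M Q => x = n \/ mem_fn M x \/ sys_fn Q x
  end.

Fixpoint swap_mem {Pap} (a b : nat) (S : mem Pap) : mem Pap :=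
  match S with
  | MNil => MNil
  | MProt A r => MProt A (swap_iface a b r)
  | MPar S1 S2 => MPar (swap_mem a b S1) (swap_mem a b S2)
  | MCoPinch n S1 => MCoPinch (swapn a b n) (swap_mem a b S1)
  | MCoFuse n => MCoFuse (swapn a b n)
  end.

Fixpoint swap_sys {Pp Pap} (a b : nat) (P : sys Pp Pap) : sys Pp Pap :=
  match P with
  | SNil => SNil
  | SProt A r => SProt A (swap_iface a b r)
  | SComp M Q => SComp (swap_mem a b M) (swap_sys a b Q)
  | SPar P1 P2 => SPar (swap_sys a b P1) (swap_sys a b P2)
  | SNu n Q => SNu (swapn a b n) (swap_sys a b Q)
  | SPinch n Q => SPinch (swapn a b n) (swap_sys a b Q)
  | SFuse n M Q => SFuse (swapn a b n) (swap_mem a b M) (swap_sys a b Q)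
  end.

Inductive akind : Type := Kp | Kpp | Kf | Kfp.   (* p, p^perp, f, f^perp *)
Definition action : Type := (akind * nat)%type.
Definition dualk (k : akind) : akind :=
  match k with Kp => Kpp | Kpp => Kp | Kf => Kfp | Kfp => Kf end.
Definition dual (a : action) : action := (dualk (fst a), snd a).

Fixpoint act_mem {Pap} (S : mem Pap) (a : action) : Prop :=
  match S with
  | MNil => False
  | MProt _ _ => False
  | MPar S1 S2 => act_mem S1 a \/ act_mem S2 a
  | MCoPinch n S1 => a = (Kpp, n) \/ act_mem S1 a
  | MCoFuse n => a = (Kfp, n)
  end.

Fixpoint act_sys {Pp Pap} (P : sys Pp Pap) (a : action) : Prop :=
  match P with
  | SNil => False
  | SProt _ _ => False
  | SComp M Q => act_mem M a \/ act_sys Q a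
  | SPar P1 P2 => act_sys P1 a \/ act_sys P2 a
  | SNu _ Q => act_sys Q a
  | SPinch n Q => a = (Kp, n) \/ act_sys Q a
  | SFuse n M Q => a = (Kf, n) \/ act_mem M a \/ act_sys Q a
  end.

Inductive alpha_sys {Pp Pap} : sys Pp Pap -> sys Pp Pap -> Prop :=
| al_refl P : alpha_sys P P
| al_sym P Q : alpha_sys P Q -> alpha_sys Q P
| al_trans P Q R : alpha_sys P Q -> alpha_sys Q R -> alpha_sys P R
| al_rename n m P : ~ sys_fn (SNu n P) m ->
    alpha_sys (SNu n P) (SNu m (swap_sys n m P))
| al_comp S P P' : alpha_sys P P' -> alpha_sys (SComp S P) (SComp S P')
| al_par_l P P' Q : alpha_sys P P' -> alpha_sys (SPar P Q) (SPar P' Q)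
| al_par_r P Q Q' : alpha_sys Q Q' -> alpha_sys (SPar P Q) (SPar P Q')
| al_nu n P P' : alpha_sys P P' -> alpha_sys (SNu n P) (SNu n P')
| al_pinch n P P' : alpha_sys P P' -> alpha_sys (SPinch n P) (SPinch n P')
| al_fuse n S P P' : alpha_sys P P' -> alpha_sys (SFuse n S P) (SFuse n S P').

Inductive mequiv {Pap} : mem Pap -> mem Pap -> Prop :=
| me_refl S : mequiv S S
| me_sym S T : mequiv S T -> mequiv T S
| me_trans S T U : mequiv S T -> mequiv T U -> mequiv S U
| me_comm S T : mequiv (MPar S T) (MPar T S)
| me_assoc S T U : mequiv (MPar (MPar S T) U) (MPar S (MPar T U))
| me_unit S : mequiv (MPar S MNil) S
| me_par_l S S' T : mequiv S S' -> mequiv (MPar S T) (MPar S' T)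
| me_par_r S T T' : mequiv T T' -> mequiv (MPar S T) (MPar S T')
| me_copinch n S S' : mequiv S S' -> mequiv (MCoPinch n S) (MCoPinch n S').

Inductive sequiv {Pp Pap} : sys Pp Pap -> sys Pp Pap -> Prop :=
| se_refl P : sequiv P P
| se_sym P Q : sequiv P Q -> sequiv Q P
| se_trans P Q R : sequiv P Q -> sequiv Q R -> sequiv P R
| se_alpha P Q : alpha_sys P Q -> sequiv P Q
| se_comm P Q : sequiv (SPar P Q) (SPar Q P)
| se_assoc P Q R : sequiv (SPar (SPar P Q) R) (SPar P (SPar Q R))
| se_unit P : sequiv (SPar P SNil) P
| se_nu_nu n m P : n <> m -> sequiv (SNu n (SNu m P)) (SNu m (SNu n P))
| se_nu_nil n : sequiv (SNu n SNil) SNil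
| se_nu_par n P Q : ~ sys_fn Q n -> sequiv (SNu n (SPar P Q)) (SPar (SNu n P) Q)
| se_nu_comp n S P : ~ mem_fn S n -> sequiv (SNu n (SComp S P)) (SComp S (SNu n P))
| se_nu_pinch n m P : n <> m -> sequiv (SNu n (SPinch m P)) (SPinch m (SNu n P))
| se_nu_fuse n m S P : n <> m -> ~ mem_fn S n ->
    sequiv (SNu n (SFuse m S P)) (SFuse m S (SNu n P))
| se_par_l P P' Q : sequiv P P' -> sequiv (SPar P Q) (SPar P' Q)
| se_par_r P Q Q' : sequiv Q Q' -> sequiv (SPar P Q) (SPar P Q')
| se_comp S S' P P' : mequiv S S' -> sequiv P P' -> sequiv (SComp S P) (SComp S' P')
| se_pinch n P P' : sequiv P P' -> sequiv (SPinch n P) (SPinch n P')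
| se_fuse n S S' P P' : sequiv (SComp S P) (SComp S' P') ->
    sequiv (SFuse n S P) (SFuse n S' P').

(* ---------- finite sets as predicates (set equality = extensional) ---------- *)
Definition nset := nat -> Prop.
Definition tset := action -> Prop.
Definition emp {A : Type} : A -> Prop := fun _ => False.
Definition single {A : Type} (x : A) : A -> Prop := fun y => y = x.
Definition union {A : Type} (X Y : A -> Prop) : A -> Prop := fun a => X a \/ Y a.
Definition seteq {A : Type} (X Y : A -> Prop) : Prop := forall a, X a <-> Y a.
Definition disj {A : Type} (X Y : A -> Prop) : Prop := forall a, X a -> Y a -> False.

Definition restr (t : tset) (X : nset) : tset := fun a => t a /\ X (snd a).
Definition perp (t : tset) : tset := fun a => t (dual a).

Definition ok_e (G1 G2 D1 D2 : nset) : Prop := disj (union G1 G2) (union D1 D2).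
Definition ok_t (G : nset) (t s : tset) : Prop := seteq (perp (restr t G)) (restr s G).

(* ---------- the type system ----------
   typ_mem G1 G2 S T  :  G1;G2 |- S : T     (membranes)
   typ_sys G1 G2 P T  :  G1;G2 |- P : T     (systems)
   Conclusion contexts/types are given up to set equality; a comma
   (disjoint union) generates a disjointness side condition.            *)
Inductive typ_mem {Pap : Type} : nset -> nset -> mem Pap -> tset -> Prop :=
| tm_empty G1 G2 T :
    seteq G1 emp -> seteq G2 emp -> seteq T emp -> typ_mem G1 G2 MNil T
| tm_prot A r G1 G2 T :
    (forall x, ifc_fn r x -> ifc_count r x <= 2) ->
    seteq G1 (fun x => ifc_count r x = 1) ->
    seteq G2 (fun x => ifc_count r x = 2) ->
    seteq T emp -> typ_mem G1 G2 (MProt A r) T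
| tm_copinch x S G1 G2 G1' G2' T :
    typ_mem G1 G2 S emp -> (forall a, ~ act_mem S a) ->
    ~ G1 x -> ~ G2 x ->
    seteq G1' (union G1 (single x)) -> seteq G2' G2 -> seteq T (single (Kpp, x)) ->
    typ_mem G1' G2' (MCoPinch x S) T
| tm_cofuse x G1 G2 T :
    seteq G1 (single x) -> seteq G2 emp -> seteq T (single (Kfp, x)) ->
    typ_mem G1 G2 (MCoFuse x) T
| tm_par G1 G G2 D1 D2 S T t s C1 C2 U :
    typ_mem (union G1 G) G2 S t -> typ_mem (union D1 G) D2 T s ->
    disj G1 G -> disj D1 G ->
    ok_e G1 G2 D1 D2 -> ok_t G t s ->
    disj G1 D1 -> disj G2 D2 -> disj G2 G -> disj D2 G ->
    seteq C1 (union G1 D1) -> seteq C2 (union G2 (union D2 G)) -> seteq U (union t s) ->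
    typ_mem C1 C2 (MPar S T) U.

Inductive typ_sys {Pp Pap : Type} : nset -> nset -> sys Pp Pap -> tset -> Prop :=
| ts_empty G1 G2 T :
    seteq G1 emp -> seteq G2 emp -> seteq T emp -> typ_sys G1 G2 SNil T
| ts_prot A r G1 G2 T :
    (forall x, ifc_fn r x -> ifc_count r x <= 2) ->
    seteq G1 (fun x => ifc_count r x = 1) ->
    seteq G2 (fun x => ifc_count r x = 2) ->
    seteq T emp -> typ_sys G1 G2 (SProt A r) T
| ts_pinch x P G1 G2 G1' G2' T :
    typ_sys G1 G2 P emp -> (forall a, ~ act_sys P a) ->
    ~ G1 x -> ~ G2 x ->
    seteq G1' (union G1 (single x)) -> seteq G2' G2 -> seteq T (single (Kp, x)) ->
    typ_sys G1' G2' (SPinch x P) T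
| ts_fuse x S P G1 G2 G1' G2' T :
    typ_sys G1 G2 (SComp S P) emp -> (forall a, ~ act_sys (SComp S P) a) ->
    ~ G1 x -> ~ G2 x ->
    seteq G1' (union G1 (single x)) -> seteq G2' G2 -> seteq T (single (Kf, x)) ->
    typ_sys G1' G2' (SFuse x S P) T
| ts_nuprot x P G1 G2 t G1' G2' T :
    typ_sys G1 G2 P t -> ~ G1 x -> seteq (restr t (single x)) emp ->
    seteq G1' G1 -> seteq G2' (fun y => G2 y /\ y <> x) -> seteq T t ->
    typ_sys G1' G2' (SNu x P) T
| ts_nuact k x P G1 G2 t G1' G2' T :
    (k = Kp \/ k = Kf) ->
    typ_sys G1 (union G2 (single x)) P (union t (union (single (k, x)) (single (dual (k, x))))) ->
    ~ G2 x -> ~ t (k, x) -> ~ t (dual (k, x)) ->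
    seteq G1' G1 -> seteq G2' G2 -> seteq T t ->
    typ_sys G1' G2' (SNu x P) T
| ts_par G1 G G2 D1 D2 P Q t s C1 C2 U :
    typ_sys (union G1 G) G2 P t -> typ_sys (union D1 G) D2 Q s ->
    disj G1 G -> disj D1 G ->
    ok_e G1 G2 D1 D2 -> ok_t G t s ->
    disj G1 D1 -> disj G2 D2 -> disj G2 G -> disj D2 G ->
    seteq C1 (union G1 D1) -> seteq C2 (union G2 (union D2 G)) -> seteq U (union t s) ->
    typ_sys C1 C2 (SPar P Q) U
| ts_cell G1 G G2 D2 S P t s C1 C2 U :
    typ_mem (union G1 G) G2 S t -> typ_sys G D2 P s ->
    disj G1 G ->
    ok_e G1 G2 emp D2 -> ok_t G t s ->
    disj G2 D2 -> disj G2 G -> disj D2 G ->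
    seteq C1 G1 -> seteq C2 (union G2 (union D2 G)) -> seteq U (union t s) ->
    typ_sys C1 C2 (SComp S P) U.

(* Typing is invariant under every axiom and congruence rule of structural equivalence,
   so the theorem follows by induction on the derivation of P == Q (and of the
   alpha-equivalences it uses).  Rule (par) is read as a relation between the contexts and
   types of its premises and conclusion; this relation is commutative, associative and has
   the empty judgement as unit, which gives the monoid axioms for both systems and
   membranes.  Every derivable judgement is well formed: its contexts are disjoint and
   cover the names of its type, and a name carries at most two actions, at most one if it
   is linear.  Hence a name that is not free in Q occurs neither in the contexts nor in the
   type of Q, which is what the scope-extrusion axioms need, and a restriction typed by
   (nu-action) hides exactly the two actions on its name.  Alpha-conversion is handled by
   equivariance of typing under transpositions of names.  For systems the induction also
   carries the fact that both sides do or do not contain actions, since the premise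
   act(K) = emp of the prefix rules is not a typing judgement. *)

From Stdlib Require Import Arith Lia Classical FunctionalExtensionality PropExtensionality.

(** * Sets of names and actions *)

Lemma seteq_eq {A : Type} (X Y : A -> Prop) : seteq X Y -> X = Y.
Proof.
  intro h. apply functional_extensionality; intro a.
  apply propositional_extensionality, h.
Qed.

Lemma seteq_refl {A : Type} (X : A -> Prop) : seteq X X.
Proof. unfold seteq; tauto. Qed.
#[local] Hint Resolve seteq_refl : core.

Lemma eq_set_iff {A : Type} (X Y : A -> Prop) : X = Y -> forall a, X a <-> Y a.
Proof. intros <- a; reflexivity. Qed.

Lemma dualk_involutive k : dualk (dualk k) = k.
Proof. now destruct k. Qed.

Lemma dual_neq k x : (k, x) <> dual (k, x).
Proof. destruct k; discriminate. Qed.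

Definition remove (X : nset) (n : nat) : nset := fun v => X v /\ v <> n.

Definition act_pair (k : akind) (x : nat) : tset := union (single (k, x)) (single (dual (k, x))).

Lemma act_pair_snd k x a : act_pair k x a -> snd a = x.
Proof. intros [-> | ->]; reflexivity. Qed.

Lemma act_pair_l k x : act_pair k x (k, x).
Proof. left; reflexivity. Qed.

Lemma act_pair_r k x : act_pair k x (dual (k, x)).
Proof. right; reflexivity. Qed.

Lemma union_remove_act_pair (t : tset) k x : (forall a, act_pair k x a -> t a) ->
  union (fun a => t a /\ ~ act_pair k x a) (act_pair k x) = t.
Proof.
  intro h. apply seteq_eq. intro a. unfold union. destruct (classic (act_pair k x a)); intuition.
Qed.

Ltac unfold_sets :=
  unfold ok_t, ok_e, seteq, union, single, emp, disj, restr, perp, remove in *.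
Ltac sets := unfold_sets; firstorder.

Lemma disj_remove_l X Y n : disj X Y -> disj (remove X n) Y.
Proof. unfold disj, remove. firstorder. Qed.

Lemma disj_remove_r X Y n : disj X Y -> disj X (remove Y n).
Proof. unfold disj, remove. firstorder. Qed.

Lemma ok_e_remove G1 G2 D1 D2 n : ok_e G1 G2 D1 D2 -> ok_e G1 G2 D1 (remove D2 n).
Proof. unfold ok_e, disj, union, remove. firstorder. Qed.

Lemma union_remove_single (X : nset) n : X n -> union (remove X n) (single n) = X.
Proof.
  intro h. apply seteq_eq. intro v. unfold_sets.
  destruct (Nat.eq_dec v n); subst; intuition congruence.
Qed.

Ltac splits := repeat match goal with |- _ /\ _ => split end.

Ltac subst_seteq := repeat match goal with
  | h : seteq ?X _ |- _ => is_var X; apply seteq_eq in h; subst X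
  end.

(** * Well-formed judgements *)

(* The last clause says that a name carries at most two actions of [t]. *)
Definition wf_judgement (G1 G2 : nset) (t : tset) : Prop :=
  disj G1 G2 /\
  (forall a, t a -> G1 (snd a) \/ G2 (snd a)) /\
  (forall a b, t a -> t b -> snd a = snd b -> G1 (snd a) -> a = b) /\
  (forall a b c, t a -> t b -> t c -> snd a = snd b -> snd b = snd c ->
     a = b \/ a = c \/ b = c).

Lemma wf_judgement_emp G1 G2 : disj G1 G2 -> wf_judgement G1 G2 emp.
Proof. intros; unfold wf_judgement; sets. Qed.

Lemma wf_judgement_single G1 G2 k x : disj G1 G2 -> ~ G2 x ->
  wf_judgement (union G1 (single x)) G2 (single (k, x)).
Proof. intros; unfold wf_judgement; sets; subst; auto. Qed.

Lemma wf_judgement_par G1 G G2 D1 D2 t s :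
  wf_judgement (union G1 G) G2 t -> wf_judgement (union D1 G) D2 s ->
  disj G1 G -> disj D1 G -> ok_e G1 G2 D1 D2 ->
  disj G1 D1 -> disj G2 D2 -> disj G2 G -> disj D2 G ->
  wf_judgement (union G1 D1) (union G2 (union D2 G)) (union t s).
Proof.
  intros [I1 [I2 [I3 I4]]] [J1 [J2 [J3 J4]]] d1 d2 oe d3 d4 d5 d6.
  assert (shared : forall a b, t a -> s b -> snd a = snd b -> G (snd a)).
  { intros a b ta sb e.
    destruct (I2 a ta) as [[h|h]|h], (J2 b sb) as [[h'|h']|h']; rewrite <- ?e in *; sets. }
  split; [|split; [|split]].
  - unfold ok_e, disj, union in *. intros v [h|h] [h'|[h'|h']]; eauto.
  - intros a [ta|sa]; [destruct (I2 a ta) as [[h|h]|h]|destruct (J2 a sa) as [[h|h]|h]];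
      unfold union; tauto.
  - intros a b [ta|sa] [tb|sb] e h.
    + apply I3; auto. destruct h as [h|h]; [left; exact h|].
      exfalso; destruct (I2 a ta) as [[h'|h']|h']; sets.
    + exfalso; pose proof (shared a b ta sb e); sets.
    + exfalso; pose proof (shared b a tb sa (eq_sym e)); rewrite e in h; sets.
    + apply J3; auto. destruct h as [h|h]; [|left; exact h].
      exfalso; destruct (J2 a sa) as [[h'|h']|h']; sets.
  - intros a b c ha hb hc e1 e2.
    assert (eb : snd b = snd a) by congruence.
    assert (ec : snd c = snd a) by congruence.
    destruct (classic (G (snd a))) as [Ga|nGa].
    + (* the name is linear on both sides, and two of the three actions lie on the same side *)
      assert (Lt : forall x y, t x -> t y -> snd x = snd a -> snd y = snd a -> x = y).
      { intros x y tx ty ex ey. apply I3; [auto|auto|congruence|rewrite ex; right; exact Ga]. }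
      assert (Ls : forall x y, s x -> s y -> snd x = snd a -> snd y = snd a -> x = y).
      { intros x y sx sy ex ey. apply J3; [auto|auto|congruence|rewrite ex; right; exact Ga]. }
      destruct ha as [ha|ha], hb as [hb|hb], hc as [hc|hc];
        solve [left; eauto | right; left; eauto | right; right; eauto].
    + assert (mixed : forall x y, t x -> s y -> snd x = snd a -> snd y = snd a -> False).
      { intros x y tx sy ex ey. apply nGa. rewrite <- ex. apply (shared x y); congruence. }
      destruct ha as [ha|ha], hb as [hb|hb], hc as [hc|hc];
        solve [apply I4; auto | apply J4; auto | exfalso; eauto].
Qed.

Lemma wf_judgement_cell G1 G G2 D2 t s :
  wf_judgement (union G1 G) G2 t -> wf_judgement G D2 s ->
  disj G1 G -> ok_e G1 G2 emp D2 ->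
  disj G2 D2 -> disj G2 G -> disj D2 G ->
  wf_judgement G1 (union G2 (union D2 G)) (union t s).
Proof.
  intros wt ws d1 oe d4 d5 d6.
  assert (e1 : union G1 emp = G1) by (apply seteq_eq; sets).
  assert (e2 : union emp G = G) by (apply seteq_eq; sets).
  rewrite <- e1. apply wf_judgement_par with (G := G); rewrite ?e1, ?e2; auto; sets.
Qed.

Lemma wf_judgement_nu_prot G1 G2 t x :
  wf_judgement G1 G2 t -> seteq (restr t (single x)) emp -> wf_judgement G1 (remove G2 x) t.
Proof.
  intros [I1 [I2 [I3 I4]]] tx. split; [sets|split; [|auto]].
  intros a ta. destruct (I2 a ta); auto. right; split; auto.
  intro e. apply (proj1 (tx a)). split; auto.
Qed.

Lemma wf_judgement_nu_action G1 G2 t k x :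
  wf_judgement G1 (union G2 (single x)) (union t (act_pair k x)) ->
  ~ t (k, x) -> ~ t (dual (k, x)) -> wf_judgement G1 G2 t.
Proof.
  intros [I1 [I2 [I3 I4]]] nk nd. split; [sets|split; [|split]].
  - intros [k' y] ta. destruct (I2 (k', y) (or_introl ta)) as [h|[h|h]]; auto.
    exfalso. unfold single in h; simpl in h; subst y.
    (* [x] would carry three distinct actions *)
    destruct (I4 (k', x) (k, x) (dual (k, x))) as [e|[e|e]];
      [left; exact ta|right; apply act_pair_l|right; apply act_pair_r|reflexivity|reflexivity|..].
    + rewrite e in ta; auto.
    + rewrite e in ta; auto.
    + exact (dual_neq k x e).
  - intros a b ha hb e h. apply I3; unfold union; auto.
  - intros a b c ha hb hc e1 e2. apply I4; unfold union; auto.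
Qed.

Lemma wf_judgement_act_pair_fresh G1 G2 t n k :
  wf_judgement G1 G2 (union t (act_pair k n)) -> ~ t (k, n) -> ~ t (dual (k, n)) ->
  forall a, t a -> snd a <> n.
Proof.
  intros [_ [_ [_ I4]]] h1 h2 [k' v] ta e. simpl in e. subst.
  destruct (I4 (k', n) (k, n) (dual (k, n))) as [e|[e|e]]; unfold union; auto.
  - right. apply act_pair_l.
  - right. apply act_pair_r.
  - rewrite <- e in h1. auto.
  - rewrite <- e in h2. auto.
  - exact (dual_neq k n e).
Qed.

Lemma ifc_count_fn r x : ifc_count r x <> 0 -> ifc_fn r x.
Proof.
  unfold ifc_count, ifc_fn. induction r as [|o r IH]; simpl; [tauto|].
  destruct o as [[| |y]|]; simpl; auto.
  destruct (Nat.eqb_spec y x); subst; simpl; auto.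
Qed.

Lemma typ_mem_wf {Pap} G1 G2 (S : mem Pap) t : typ_mem G1 G2 S t ->
  wf_judgement G1 G2 t /\ (forall x, G1 x \/ G2 x -> mem_fn S x) /\
  (forall a, t a -> act_mem S a).
Proof.
  induction 1; subst_seteq; simpl.
  - split; [apply wf_judgement_emp|]; sets.
  - split; [apply wf_judgement_emp|split].
    + intros y h1 h2. rewrite h1 in h2. discriminate.
    + intros y [h|h]; apply ifc_count_fn; rewrite h; discriminate.
    + sets.
  - destruct IHtyp_mem as [[I1 _] [F _]].
    split; [apply wf_judgement_single; auto|]. sets.
  - split; [|sets].
    assert (e : single x = union emp (single x)) by (apply seteq_eq; sets).
    rewrite e. apply wf_judgement_single; sets.
  - destruct IHtyp_mem1 as [I1 [F1 A1]], IHtyp_mem2 as [I2 [F2 A2]].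
    split; [apply wf_judgement_par; auto|].
    split; [unfold union in *; intros y [[h|h]|[h|[h|h]]]|intros a [h|h]]; auto.
Qed.

Lemma typ_sys_wf {Pp Pap} G1 G2 (P : sys Pp Pap) t : typ_sys G1 G2 P t ->
  wf_judgement G1 G2 t /\ (forall x, G1 x \/ G2 x -> sys_fn P x) /\
  (forall a, t a -> act_sys P a).
Proof.
  induction 1; subst_seteq; simpl.
  - split; [apply wf_judgement_emp|]; sets.
  - split; [apply wf_judgement_emp|split].
    + intros y h1 h2. rewrite h1 in h2. discriminate.
    + intros y [h|h]; apply ifc_count_fn; rewrite h; discriminate.
    + sets.
  - destruct IHtyp_sys as [[I1 _] [F _]].
    split; [apply wf_judgement_single; auto|]. sets.
  - destruct IHtyp_sys as [[I1 _] [F _]].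
    split; [apply wf_judgement_single; auto|]. sets.
  - destruct IHtyp_sys as [I [F A]]. split; [apply wf_judgement_nu_prot; auto|split; auto].
    intros y [h|[h h']]; split; auto. intros ->; auto.
  - destruct IHtyp_sys as [I [F A]]. split; [eapply wf_judgement_nu_action; eauto|split].
    + intros y [h|h]; split.
      * intros ->. apply (proj1 I x); unfold_sets; auto.
      * auto.
      * intros ->; auto.
      * apply F; unfold_sets; auto.
    + intros a h. apply A. left; exact h.
  - destruct IHtyp_sys1 as [I1 [F1 A1]], IHtyp_sys2 as [I2 [F2 A2]].
    split; [apply wf_judgement_par; auto|].
    split; [unfold union in *; intros y [[h|h]|[h|[h|h]]]|intros a [h|h]]; auto.
  - destruct IHtyp_sys as [I2 [F2 A2]], (typ_mem_wf _ _ _ _ H) as [I1 [F1 A1]].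
    split; [apply wf_judgement_cell; auto|].
    split; [unfold union in *; intros y [h|[h|[h|h]]]|intros a [h|h]]; auto.
Qed.

Lemma typ_sys_fresh {Pp Pap} G1 G2 (P : sys Pp Pap) t n :
  typ_sys G1 G2 P t -> ~ sys_fn P n ->
  ~ G1 n /\ ~ G2 n /\ (forall a, t a -> snd a <> n).
Proof.
  intros h f. destruct (typ_sys_wf _ _ _ _ h) as [[_ [I2 _]] [F _]].
  split; [|split]; auto. intros a ta <-. destruct (I2 a ta); auto.
Qed.

Lemma typ_mem_fresh {Pap} G1 G2 (S : mem Pap) t n :
  typ_mem G1 G2 S t -> ~ mem_fn S n ->
  ~ G1 n /\ ~ G2 n /\ (forall a, t a -> snd a <> n).
Proof.
  intros h f. destruct (typ_mem_wf _ _ _ _ h) as [[_ [I2 _]] [F _]].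
  split; [|split]; auto. intros a ta <-. destruct (I2 a ta); auto.
Qed.

Lemma typ_sys_act {Pp Pap} G1 G2 (P : sys Pp Pap) t a : typ_sys G1 G2 P t -> t a -> act_sys P a.
Proof. intros h ta. apply (typ_sys_wf _ _ _ _ h), ta. Qed.

(** * Equivariance under name transpositions *)

Ltac swap_cases := unfold swapn; repeat (match goal with
  |- context [Nat.eqb ?u ?v] => is_var u; is_var v; destruct (Nat.eqb_spec u v) end; cbn in *);
  subst; try lia; try congruence.

Lemma swapn_involutive a b x : swapn a b (swapn a b x) = x.
Proof. swap_cases. Qed.

Lemma swapn_eq a b x y : swapn a b y = x <-> y = swapn a b x.
Proof. split; intro h; subst; rewrite swapn_involutive; reflexivity. Qed.

Lemma swapn_sym a b x : swapn a b x = swapn b a x.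
Proof. swap_cases. Qed.

Lemma swapn_id a x : swapn a a x = x.
Proof. swap_cases. Qed.

Lemma swapn_other a b x : x <> a -> x <> b -> swapn a b x = x.
Proof. swap_cases. Qed.

Lemma swapn_l a b : swapn a b a = b.
Proof. swap_cases. Qed.

Lemma swapn_r a b : swapn a b b = a.
Proof. swap_cases. Qed.

Lemma pair_swapn_eq a b (k k' : akind) x y :
  (k, y) = (k', swapn a b x) <-> (k, swapn a b y) = (k', x).
Proof. split; intro h; inversion h; subst; rewrite ?swapn_involutive; reflexivity. Qed.

Lemma ifc_count_swap a b r x : ifc_count (swap_iface a b r) x = ifc_count r (swapn a b x).
Proof.
  unfold ifc_count, swap_iface. induction r as [|o r IH]; simpl; auto.
  destruct o as [[| |y]|]; simpl; auto.
  destruct (Nat.eqb_spec (swapn a b y) x), (Nat.eqb_spec y (swapn a b x)); simpl;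
    rewrite ?IH; auto; exfalso; apply swapn_eq in e; auto.
Qed.

Lemma ifc_fn_swap a b r x : ifc_fn (swap_iface a b r) x <-> ifc_fn r (swapn a b x).
Proof.
  unfold ifc_fn, swap_iface. induction r as [|o r IH]; simpl; [tauto|].
  rewrite IH. destruct o as [[| |y]|]; simpl; split; intros [h|h]; auto; try discriminate;
    left; inversion h; subst; rewrite swapn_involutive; reflexivity.
Qed.

Lemma mem_fn_swap {Pap} a b (S : mem Pap) x :
  mem_fn (swap_mem a b S) x <-> mem_fn S (swapn a b x).
Proof.
  induction S; simpl; rewrite ?ifc_fn_swap, ?swapn_eq; tauto.
Qed.

Lemma sys_fn_swap {Pp Pap} a b (P : sys Pp Pap) x :
  sys_fn (swap_sys a b P) x <-> sys_fn P (swapn a b x).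
Proof.
  induction P; simpl; rewrite ?ifc_fn_swap, ?mem_fn_swap, ?swapn_eq; tauto.
Qed.

Lemma act_mem_swap {Pap} a b (S : mem Pap) k y :
  act_mem (swap_mem a b S) (k, y) <-> act_mem S (k, swapn a b y).
Proof. induction S; simpl; rewrite ?pair_swapn_eq; tauto. Qed.

Lemma act_sys_swap {Pp Pap} a b (P : sys Pp Pap) k y :
  act_sys (swap_sys a b P) (k, y) <-> act_sys P (k, swapn a b y).
Proof. induction P; simpl; rewrite ?act_mem_swap, ?pair_swapn_eq; tauto. Qed.

Lemma swap_iface_id a r : swap_iface a a r = r.
Proof.
  unfold swap_iface. induction r as [|[[| |y]|] r IH]; simpl; rewrite ?IH, ?swapn_id; auto.
Qed.

Lemma swap_mem_id {Pap} a (S : mem Pap) : swap_mem a a S = S.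
Proof. induction S; simpl; rewrite ?swap_iface_id, ?swapn_id; congruence. Qed.

Lemma swap_sys_id {Pp Pap} a (P : sys Pp Pap) : swap_sys a a P = P.
Proof. induction P; simpl; rewrite ?swap_iface_id, ?swapn_id, ?swap_mem_id; congruence. Qed.

Lemma swapn_cancel a b x : swapn b a (swapn a b x) = x.
Proof. rewrite swapn_sym. apply swapn_involutive. Qed.

Lemma swap_iface_cancel a b r : swap_iface b a (swap_iface a b r) = r.
Proof.
  unfold swap_iface. induction r as [|[[| |y]|] r IH]; simpl; rewrite ?IH, ?swapn_cancel; auto.
Qed.

Lemma swap_mem_cancel {Pap} a b (S : mem Pap) : swap_mem b a (swap_mem a b S) = S.
Proof. induction S; simpl; rewrite ?swap_iface_cancel, ?swapn_cancel; congruence. Qed.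

Lemma swap_sys_cancel {Pp Pap} a b (P : sys Pp Pap) : swap_sys b a (swap_sys a b P) = P.
Proof.
  induction P; simpl; rewrite ?swap_iface_cancel, ?swapn_cancel, ?swap_mem_cancel; congruence.
Qed.

Definition swap_nset (a b : nat) (X : nset) : nset := fun y => X (swapn a b y).
Definition swap_tset (a b : nat) (t : tset) : tset := fun p => t (fst p, swapn a b (snd p)).

Lemma swap_nset_single a b x : swap_nset a b (single x) = single (swapn a b x).
Proof. apply seteq_eq. intro y. apply swapn_eq. Qed.

Lemma swap_nset_union_single a b X x :
  seteq (swap_nset a b (union X (single x))) (union (swap_nset a b X) (single (swapn a b x))).
Proof. intro y. unfold swap_nset, union, single. rewrite swapn_eq. tauto. Qed.

Lemma swap_tset_single a b k x : swap_tset a b (single (k, x)) = single (k, swapn a b x).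
Proof.
  apply seteq_eq. intros [k' y]. unfold swap_tset, single. simpl. rewrite pair_swapn_eq. tauto.
Qed.

Lemma swap_nset_disj a b X Y : disj X Y -> disj (swap_nset a b X) (swap_nset a b Y).
Proof. unfold disj, swap_nset. eauto. Qed.

Lemma swap_nset_ok_e a b G1 G2 D1 D2 : ok_e G1 G2 D1 D2 ->
  ok_e (swap_nset a b G1) (swap_nset a b G2) (swap_nset a b D1) (swap_nset a b D2).
Proof. unfold ok_e, disj, swap_nset, union. eauto. Qed.

Lemma swap_ok_t a b G t s : ok_t G t s ->
  ok_t (swap_nset a b G) (swap_tset a b t) (swap_tset a b s).
Proof.
  unfold ok_t, seteq, swap_nset, swap_tset, perp, restr. intros h [k y]. apply (h (k, swapn a b y)).
Qed.

Lemma swap_nset_fresh n m X : ~ X n -> ~ X m -> swap_nset n m X = X.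
Proof.
  intros hn hm. apply seteq_eq. intro v. unfold swap_nset.
  destruct (Nat.eq_dec v n) as [->|]; [rewrite swapn_l; tauto|].
  destruct (Nat.eq_dec v m) as [->|]; [rewrite swapn_r; tauto|].
  rewrite swapn_other; tauto.
Qed.

Lemma swap_tset_fresh n m t :
  (forall a, t a -> snd a <> n) -> (forall a, t a -> snd a <> m) -> swap_tset n m t = t.
Proof.
  intros hn hm. apply seteq_eq. intros [k v]. unfold swap_tset. simpl.
  destruct (Nat.eq_dec v n) as [->|].
  - rewrite swapn_l. split; intro h; exfalso; [exact (hm _ h eq_refl)|exact (hn _ h eq_refl)].
  - destruct (Nat.eq_dec v m) as [->|].
    + rewrite swapn_r. split; intro h; exfalso; [exact (hn _ h eq_refl)|exact (hm _ h eq_refl)].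
    + rewrite swapn_other; tauto.
Qed.

Lemma swap_tset_act_pair n m k : swap_tset n m (act_pair k n) = act_pair k m.
Proof.
  change (union (swap_tset n m (single (k, n))) (swap_tset n m (single (dualk k, n)))
          = act_pair k m).
  rewrite !swap_tset_single, swapn_l. reflexivity.
Qed.

#[local] Hint Resolve swap_nset_disj swap_nset_ok_e swap_ok_t : core.

Lemma typ_mem_swap {Pap} a b G1 G2 (S : mem Pap) t : typ_mem G1 G2 S t ->
  typ_mem (swap_nset a b G1) (swap_nset a b G2) (swap_mem a b S) (swap_tset a b t).
Proof.
  induction 1; subst_seteq; simpl.
  - apply tm_empty; auto.
  - apply tm_prot; unfold swap_nset; intros y; rewrite ?ifc_count_swap, ?ifc_fn_swap; auto; tauto.
  - rewrite swap_tset_single.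
    apply tm_copinch with (G1 := swap_nset a b G1) (G2 := swap_nset a b G2);
      auto using swap_nset_union_single; unfold swap_nset; rewrite ?swapn_involutive; auto.
    intros [k y]. rewrite act_mem_swap. auto.
  - rewrite swap_nset_single, swap_tset_single. apply tm_cofuse; auto.
  - eapply tm_par with (G1 := swap_nset a b G1) (G := swap_nset a b G) (D1 := swap_nset a b D1);
      eauto.
Qed.

Lemma typ_sys_seteq {Pp Pap} G1 G2 (P : sys Pp Pap) t G1' G2' t' :
  typ_sys G1 G2 P t -> seteq G1 G1' -> seteq G2 G2' -> seteq t t' -> typ_sys G1' G2' P t'.
Proof. intros h e1 e2 e3. apply seteq_eq in e1, e2, e3. subst. exact h. Qed.

Lemma typ_sys_swap {Pp Pap} a b G1 G2 (P : sys Pp Pap) t : typ_sys G1 G2 P t ->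
  typ_sys (swap_nset a b G1) (swap_nset a b G2) (swap_sys a b P) (swap_tset a b t).
Proof.
  induction 1; subst_seteq; simpl.
  - apply ts_empty; auto.
  - apply ts_prot; unfold swap_nset; intros y; rewrite ?ifc_count_swap, ?ifc_fn_swap; auto; tauto.
  - rewrite swap_tset_single.
    apply ts_pinch with (G1 := swap_nset a b G1) (G2 := swap_nset a b G2);
      auto using swap_nset_union_single; unfold swap_nset; rewrite ?swapn_involutive; auto.
    intros [k y]. rewrite act_sys_swap. auto.
  - rewrite swap_tset_single.
    apply ts_fuse with (G1 := swap_nset a b G1) (G2 := swap_nset a b G2);
      auto using swap_nset_union_single; unfold swap_nset; rewrite ?swapn_involutive; auto.
    intros [k y]. rewrite (act_sys_swap a b (SComp S P) k y). apply H0.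
  - apply ts_nuprot with (G1 := swap_nset a b G1) (G2 := swap_nset a b G2) (t := swap_tset a b t);
      auto.
    + unfold swap_nset. rewrite swapn_involutive. auto.
    + intros [k y]. unfold restr, swap_tset, single, emp. simpl. rewrite <- swapn_eq.
      apply (H1 (k, swapn a b y)).
    + intro y. unfold swap_nset. rewrite swapn_eq. tauto.
  - apply ts_nuact with (k := k) (G1 := swap_nset a b G1) (G2 := swap_nset a b G2)
      (t := swap_tset a b t); auto.
    + eapply typ_sys_seteq; [exact IHtyp_sys | auto | apply swap_nset_union_single |].
      intros [k' y]. unfold swap_tset, union, single, dual. simpl. rewrite !pair_swapn_eq. tauto.
    + unfold swap_nset. rewrite swapn_involutive. auto.
    + unfold swap_tset. simpl. rewrite swapn_involutive. auto.
    + unfold swap_tset. simpl. rewrite swapn_involutive. auto.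
  - eapply ts_par with (G1 := swap_nset a b G1) (G := swap_nset a b G) (D1 := swap_nset a b D1);
      eauto.
  - eapply ts_cell with (G1 := swap_nset a b G1) (G := swap_nset a b G); eauto.
    + exact (typ_mem_swap a b _ _ _ _ H).
    + exact (swap_nset_ok_e a b _ _ emp _ H2).
Qed.

(** * Parallel composition *)

(* [par_rel x1 x2 tx y1 y2 ty z1 z2 tz]: rule (par) derives the judgement [z1;z2 |- _ : tz]
   from premises with contexts and types [x1;x2 |- _ : tx] and [y1;y2 |- _ : ty]. *)
Definition par_rel (x1 x2 : nset) (tx : tset) (y1 y2 : nset) (ty : tset)
    (z1 z2 : nset) (tz : tset) : Prop :=
  exists G1 G D1, x1 = union G1 G /\ y1 = union D1 G /\ disj G1 G /\ disj D1 G /\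
    ok_e G1 x2 D1 y2 /\ ok_t G tx ty /\ disj G1 D1 /\ disj x2 y2 /\ disj x2 G /\ disj y2 G /\
    z1 = union G1 D1 /\ z2 = union x2 (union y2 G) /\ tz = union tx ty.

Lemma typ_sys_par_iff {Pp Pap} z1 z2 (P Q : sys Pp Pap) tz :
  typ_sys z1 z2 (SPar P Q) tz <-> exists x1 x2 tx y1 y2 ty,
    typ_sys x1 x2 P tx /\ typ_sys y1 y2 Q ty /\ par_rel x1 x2 tx y1 y2 ty z1 z2 tz.
Proof.
  split.
  - intro h. inversion h; subst; subst_seteq.
    do 6 eexists. split; [eassumption|split; [eassumption|]].
    exists G1, G, D1. splits; assumption || reflexivity.
  - intros (x1 & x2 & tx & y1 & y2 & ty & h1 & h2 & G1 & G & D1 & -> & -> & ? & ? & ? & ? & ? &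
      ? & ? & ? & -> & -> & ->).
    eapply ts_par; eauto.
Qed.

Lemma typ_mem_par_iff {Pap} z1 z2 (S T : mem Pap) tz :
  typ_mem z1 z2 (MPar S T) tz <-> exists x1 x2 tx y1 y2 ty,
    typ_mem x1 x2 S tx /\ typ_mem y1 y2 T ty /\ par_rel x1 x2 tx y1 y2 ty z1 z2 tz.
Proof.
  split.
  - intro h. inversion h; subst; subst_seteq.
    do 6 eexists. split; [eassumption|split; [eassumption|]].
    exists G1, G, D1. splits; assumption || reflexivity.
  - intros (x1 & x2 & tx & y1 & y2 & ty & h1 & h2 & G1 & G & D1 & -> & -> & ? & ? & ? & ? & ? &
      ? & ? & ? & -> & -> & ->).
    eapply tm_par; eauto.
Qed.

Lemma typ_sys_nil_iff {Pp Pap} G1 G2 t :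
  @typ_sys Pp Pap G1 G2 SNil t <-> G1 = emp /\ G2 = emp /\ t = emp.
Proof.
  split; [intro h; inversion h; subst; subst_seteq; auto|].
  intros (-> & -> & ->). apply ts_empty; auto.
Qed.

Lemma typ_mem_nil_iff {Pap} G1 G2 t :
  @typ_mem Pap G1 G2 MNil t <-> G1 = emp /\ G2 = emp /\ t = emp.
Proof.
  split; [intro h; inversion h; subst; subst_seteq; auto|].
  intros (-> & -> & ->). apply tm_empty; auto.
Qed.

(* Prove a set equality, or a pointwise statement, by specialising every hypothesis at
   the point (and at the dual action) and reasoning propositionally. *)
Ltac spec_nat n := repeat match goal with h : forall m : nat, _ |- _ => specialize (h n) end.
Ltac spec_act k n := repeat match goal with h : forall a : action, _ |- _ =>
  let h1 := fresh in let h2 := fresh in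
  pose proof (h (k, n)) as h1; pose proof (h (dualk k, n)) as h2; clear h; cbn in h1, h2 end.
Ltac pointwise := unfold_sets; cbn in *;
  first [ apply seteq_eq; let k := fresh "k" in let n := fresh "n" in
            intros [k n]; spec_act k n; spec_nat n; cbn in *; tauto
        | apply seteq_eq; let n := fresh "n" in intro n; spec_nat n; cbn in *; tauto
        | let k := fresh "k" in let n := fresh "n" in
            intros [k n]; spec_act k n; spec_nat n; cbn in *; tauto
        | let n := fresh "n" in intro n; spec_nat n; cbn in *; tauto ].

Lemma par_rel_comm x1 x2 tx y1 y2 ty z1 z2 tz :
  par_rel x1 x2 tx y1 y2 ty z1 z2 tz -> par_rel y1 y2 ty x1 x2 tx z1 z2 tz.
Proof.
  intros (G1 & G & D1 & -> & -> & d1 & d2 & oe & ot & d3 & d4 & d5 & d6 & -> & -> & ->).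
  exists D1, G, G1. splits; auto; try pointwise.
  intros [k n]. specialize (ot (dualk k, n)).
  unfold seteq, perp, restr, dual in *. cbn in *. rewrite dualk_involutive in ot. tauto.
Qed.

Lemma par_rel_assoc x1 x2 tx y1 y2 ty z1 z2 tz w1 w2 tw v1 v2 tv :
  wf_judgement x1 x2 tx -> wf_judgement y1 y2 ty -> wf_judgement z1 z2 tz ->
  par_rel x1 x2 tx y1 y2 ty w1 w2 tw -> par_rel w1 w2 tw z1 z2 tz v1 v2 tv ->
  exists u1 u2 tu, par_rel y1 y2 ty z1 z2 tz u1 u2 tu /\ par_rel x1 x2 tx u1 u2 tu v1 v2 tv.
Proof.
  intros [X1 [X2 _]] [Y1 [Y2 _]] [Z1 [Z2 _]]
    (A1 & G & B1 & -> & -> & d1 & d2 & oe & ot & d3 & d4 & d5 & d6 & W & -> & ->)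
    (C1 & H & E1 & f1 & -> & g1 & g2 & oe' & ot' & g3 & g4 & g5 & g6 & -> & -> & ->).
  pose proof (eq_set_iff _ _ f1) as F1. subst w1. clear f1.
  set (y_only := fun n => (B1 n /\ C1 n) \/ G n).
  set (yz_shared := fun n => B1 n /\ H n).
  set (z_only := fun n => E1 n \/ (H n /\ A1 n)).
  set (x_only := fun n => A1 n /\ C1 n).
  set (x_yz_shared := fun n => G n \/ (H n /\ A1 n)).
  set (yz_only := fun n => (B1 n /\ C1 n) \/ E1 n).
  exists (union y_only z_only), (union y2 (union z2 yz_shared)), (union ty tz). split.
  - exists y_only, yz_shared, z_only. subst y_only yz_shared z_only. splits.
    6: { intros [k n]. pose proof (ot' (k, n)) as O. pose proof (X2 (dualk k, n)) as N.
         clear ot ot' X2 Y2 Z2 X1 Y1 Z1 F1. unfold_sets. spec_nat n. cbn in *. tauto. }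
    all: clear X2 Y2 Z2 ot ot'; pointwise.
  - exists x_only, x_yz_shared, yz_only.
    subst y_only yz_shared z_only x_only x_yz_shared yz_only. splits.
    6: { intros [k n]. pose proof (ot (k, n)) as O. pose proof (ot' (k, n)) as O'.
         pose proof (Y2 (dualk k, n)) as N1. pose proof (Y2 (k, n)) as N2.
         pose proof (Z2 (k, n)) as N3.
         clear ot ot' X2 Y2 Z2 X1 Y1 Z1 F1. unfold_sets. spec_nat n. cbn in *. tauto. }
    12: { apply seteq_eq. intro a. unfold union. tauto. }
    all: clear X2 Y2 Z2 ot ot'; pointwise.
Qed.

Lemma par_rel_nil x1 x2 tx : par_rel x1 x2 tx emp emp emp x1 x2 tx.
Proof. exists x1, emp, emp. splits; pointwise. Qed.

Lemma par_rel_nil_inv x1 x2 tx z1 z2 tz :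
  par_rel x1 x2 tx emp emp emp z1 z2 tz -> z1 = x1 /\ z2 = x2 /\ tz = tx.
Proof.
  intros (G1 & G & D1 & -> & e2 & d1 & d2 & oe & ot & d3 & d4 & d5 & d6 & -> & -> & ->).
  pose proof (eq_set_iff _ _ e2) as E2. clear e2. splits; pointwise.
Qed.

Section ParallelLaws.

Variables (K : Type) (typ : nset -> nset -> K -> tset -> Prop) (par : K -> K -> K) (nil : K).

Hypothesis typ_par_iff : forall z1 z2 P Q tz,
  typ z1 z2 (par P Q) tz <-> exists x1 x2 tx y1 y2 ty,
    typ x1 x2 P tx /\ typ y1 y2 Q ty /\ par_rel x1 x2 tx y1 y2 ty z1 z2 tz.
Hypothesis typ_wf : forall G1 G2 P t, typ G1 G2 P t -> wf_judgement G1 G2 t.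
Hypothesis typ_nil_iff : forall G1 G2 t, typ G1 G2 nil t <-> G1 = emp /\ G2 = emp /\ t = emp.

Lemma typ_par_comm P Q G1 G2 t : typ G1 G2 (par P Q) t -> typ G1 G2 (par Q P) t.
Proof.
  rewrite !typ_par_iff. intros (x1 & x2 & tx & y1 & y2 & ty & hP & hQ & p).
  exists y1, y2, ty, x1, x2, tx. auto using par_rel_comm.
Qed.

Lemma typ_par_assoc P Q R G1 G2 t :
  typ G1 G2 (par (par P Q) R) t -> typ G1 G2 (par P (par Q R)) t.
Proof.
  rewrite typ_par_iff. intros (w1 & w2 & tw & z1 & z2 & tz & hPQ & hR & p2).
  rewrite typ_par_iff in hPQ. destruct hPQ as (x1 & x2 & tx & y1 & y2 & ty & hP & hQ & p1).
  destruct (par_rel_assoc _ _ _ _ _ _ _ _ _ _ _ _ _ _ _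
              (typ_wf _ _ _ _ hP) (typ_wf _ _ _ _ hQ) (typ_wf _ _ _ _ hR) p1 p2)
    as (u1 & u2 & tu & q1 & q2).
  rewrite typ_par_iff. exists x1, x2, tx, u1, u2, tu. splits; auto.
  rewrite typ_par_iff. exists y1, y2, ty, z1, z2, tz. auto.
Qed.

Lemma typ_par_assoc_rev P Q R G1 G2 t :
  typ G1 G2 (par P (par Q R)) t -> typ G1 G2 (par (par P Q) R) t.
Proof.
  intro h. apply typ_par_comm, typ_par_assoc, typ_par_comm, typ_par_assoc, typ_par_comm.
  exact h.
Qed.

Lemma typ_par_nil P G1 G2 t : typ G1 G2 (par P nil) t <-> typ G1 G2 P t.
Proof.
  rewrite typ_par_iff. split.
  - intros (x1 & x2 & tx & y1 & y2 & ty & hP & hnil & p).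
    apply typ_nil_iff in hnil as (-> & -> & ->).
    destruct (par_rel_nil_inv _ _ _ _ _ _ p) as (-> & -> & ->). exact hP.
  - intro h. exists G1, G2, t, emp, emp, emp.
    splits; [exact h|apply typ_nil_iff; auto|apply par_rel_nil].
Qed.

Lemma typ_par_congr P P' Q :
  (forall G1 G2 t, typ G1 G2 P t -> typ G1 G2 P' t) ->
  forall G1 G2 t, typ G1 G2 (par P Q) t -> typ G1 G2 (par P' Q) t.
Proof.
  intros h G1 G2 t. rewrite !typ_par_iff.
  intros (x1 & x2 & tx & y1 & y2 & ty & hP & hQ & p).
  exists x1, x2, tx, y1, y2, ty. auto.
Qed.

End ParallelLaws.

Lemma typ_sys_wf_judgement {Pp Pap} G1 G2 (P : sys Pp Pap) t :
  typ_sys G1 G2 P t -> wf_judgement G1 G2 t.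
Proof. intro h. apply (typ_sys_wf _ _ _ _ h). Qed.

Lemma typ_mem_wf_judgement {Pap} G1 G2 (S : mem Pap) t :
  typ_mem G1 G2 S t -> wf_judgement G1 G2 t.
Proof. intro h. apply (typ_mem_wf _ _ _ _ h). Qed.

(* Membranes have no binders, so equivalent membranes have literally the same actions. *)
Lemma mequiv_typ {Pap} (S T : mem Pap) : mequiv S T ->
  (forall a, act_mem S a <-> act_mem T a) /\
  (forall G1 G2 t, typ_mem G1 G2 S t <-> typ_mem G1 G2 T t).
Proof.
  pose proof (@typ_par_comm _ _ _ (@typ_mem_par_iff Pap)) as comm.
  pose proof (@typ_par_congr _ _ _ (@typ_mem_par_iff Pap)) as congr.
  induction 1 as [S|S T _ [IHa IHt]|S T U _ [IHa1 IHt1] _ [IHa2 IHt2]|S T|S T U|S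
                 |S S' T _ [IHa IHt]|S T T' _ [IHa IHt]|n S S' _ [IHa IHt]]; simpl.
  - split; reflexivity.
  - split; intros; symmetry; auto.
  - split; intros; [rewrite IHa1|rewrite IHt1]; auto.
  - split; [tauto|split; apply comm].
  - split; [tauto|].
    split; [apply (typ_par_assoc _ _ _ (@typ_mem_par_iff Pap) (@typ_mem_wf_judgement Pap))
           |apply (typ_par_assoc_rev _ _ _ (@typ_mem_par_iff Pap) (@typ_mem_wf_judgement Pap))].
  - split; [tauto|]. apply (typ_par_nil _ _ _ _ (@typ_mem_par_iff Pap) (@typ_mem_nil_iff Pap)).
  - split; [intro; rewrite IHa; tauto|].
    split; apply congr; intros; apply IHt; auto.
  - split; [intro; rewrite IHa; tauto|].
    split; intro h; apply comm; [apply congr with T|apply congr with T'];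
      solve [apply comm, h | intros; apply IHt; assumption].
  - split; [intro; rewrite IHa; tauto|].
    split; intro h; inversion h; subst; subst_seteq;
      (eapply tm_copinch; [apply IHt; eassumption|intro a; first [rewrite IHa|rewrite <- IHa]|..]);
      eauto.
Qed.

(** * Restriction, prefixes and cells *)

Lemma typ_nu_inv {Pp Pap} G1 G2 x (P : sys Pp Pap) t : typ_sys G1 G2 (SNu x P) t ->
  (exists G2', typ_sys G1 G2' P t /\ ~ G1 x /\ (forall a, t a -> snd a <> x) /\
     G2 = remove G2' x) \/
  (exists k, (k = Kp \/ k = Kf) /\ typ_sys G1 (union G2 (single x)) P (union t (act_pair k x)) /\
     ~ G2 x /\ ~ t (k, x) /\ ~ t (dual (k, x))).
Proof.
  intro h. inversion h; subst; subst_seteq.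
  - left. eexists. splits; eauto. intros a ta e.
    match goal with h : seteq (restr _ _) _ |- _ => apply (proj1 (h a)) end. split; auto.
  - right. exists k. splits; auto.
Qed.

Lemma typ_nu_prot {Pp Pap} G1 G2 G2' x (P : sys Pp Pap) t :
  typ_sys G1 G2' P t -> ~ G1 x -> (forall a, t a -> snd a <> x) ->
  seteq G2 (remove G2' x) -> typ_sys G1 G2 (SNu x P) t.
Proof.
  intros h n tx e. eapply ts_nuprot; eauto.
  intros a. unfold restr, single, emp. split; [|tauto]. intros [ta ea]. exact (tx a ta ea).
Qed.

Lemma typ_nu_action {Pp Pap} k G1 G2 G2' x (P : sys Pp Pap) t t' :
  (k = Kp \/ k = Kf) -> typ_sys G1 G2' P t' ->
  seteq G2' (union G2 (single x)) -> seteq t' (union t (act_pair k x)) ->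
  ~ G2 x -> ~ t (k, x) -> ~ t (dual (k, x)) -> typ_sys G1 G2 (SNu x P) t.
Proof.
  intros hk h e1 e2 n1 n2 n3. apply seteq_eq in e1, e2. subst. eapply ts_nuact; eauto.
Qed.

Lemma typ_pinch_inv {Pp Pap} G1 G2 x (P : sys Pp Pap) t : typ_sys G1 G2 (SPinch x P) t ->
  exists H1, typ_sys H1 G2 P emp /\ (forall a, ~ act_sys P a) /\ ~ H1 x /\ ~ G2 x /\
    G1 = union H1 (single x) /\ t = single (Kp, x).
Proof. intro h. inversion h; subst; subst_seteq. eauto 10. Qed.

Lemma typ_pinch {Pp Pap} H1 G1 G2 x (P : sys Pp Pap) t :
  typ_sys H1 G2 P emp -> (forall a, ~ act_sys P a) -> ~ H1 x -> ~ G2 x ->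
  seteq G1 (union H1 (single x)) -> seteq t (single (Kp, x)) -> typ_sys G1 G2 (SPinch x P) t.
Proof. intros. eapply ts_pinch; eauto. Qed.

Lemma typ_fuse_inv {Pp Pap} G1 G2 x S (P : sys Pp Pap) t : typ_sys G1 G2 (SFuse x S P) t ->
  exists H1, typ_sys H1 G2 (SComp S P) emp /\ (forall a, ~ act_sys (SComp S P) a) /\
    ~ H1 x /\ ~ G2 x /\ G1 = union H1 (single x) /\ t = single (Kf, x).
Proof. intro h. inversion h; subst; subst_seteq. eauto 10. Qed.

Lemma typ_fuse {Pp Pap} H1 G1 G2 x S (P : sys Pp Pap) t :
  typ_sys H1 G2 (SComp S P) emp -> (forall a, ~ act_sys (SComp S P) a) -> ~ H1 x -> ~ G2 x ->
  seteq G1 (union H1 (single x)) -> seteq t (single (Kf, x)) -> typ_sys G1 G2 (SFuse x S P) t.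
Proof. intros. eapply ts_fuse; eauto. Qed.

Lemma typ_cell_inv {Pp Pap} C1 C2 S (P : sys Pp Pap) U : typ_sys C1 C2 (SComp S P) U ->
  exists G G2 D2 t s, typ_mem (union C1 G) G2 S t /\ typ_sys G D2 P s /\ disj C1 G /\
    ok_e C1 G2 emp D2 /\ ok_t G t s /\ disj G2 D2 /\ disj G2 G /\ disj D2 G /\
    C2 = union G2 (union D2 G) /\ U = union t s.
Proof. intro h. inversion h; subst; subst_seteq. exists G, G2, D2, t, s. splits; auto. Qed.

Lemma typ_cell {Pp Pap} C1 C2 G G2 D2 t s S (P : sys Pp Pap) U :
  typ_mem (union C1 G) G2 S t -> typ_sys G D2 P s -> disj C1 G -> ok_e C1 G2 emp D2 ->
  ok_t G t s -> disj G2 D2 -> disj G2 G -> disj D2 G ->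
  seteq C2 (union G2 (union D2 G)) -> seteq U (union t s) -> typ_sys C1 C2 (SComp S P) U.
Proof. intros. eapply ts_cell; eauto. Qed.

Definition has_act {Pp Pap} (P : sys Pp Pap) : Prop := exists a, act_sys P a.

Lemma no_act_iff {Pp Pap} (P : sys Pp Pap) : (forall a, ~ act_sys P a) <-> ~ has_act P.
Proof. unfold has_act. firstorder. Qed.

Lemma typ_nu_congr {Pp Pap} n (P P' : sys Pp Pap) :
  (forall G1 G2 t, typ_sys G1 G2 P t -> typ_sys G1 G2 P' t) ->
  forall G1 G2 t, typ_sys G1 G2 (SNu n P) t -> typ_sys G1 G2 (SNu n P') t.
Proof.
  intros h G1 G2 t hn.
  destruct (typ_nu_inv _ _ _ _ _ hn) as [(G2' & h1 & h2 & h3 & ->)|(k & hk & h1 & h2 & h3 & h4)].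
  - eapply typ_nu_prot; eauto.
  - eapply typ_nu_action; eauto.
Qed.

Lemma typ_cell_congr {Pp Pap} S S' (P P' : sys Pp Pap) :
  (forall G1 G2 t, typ_mem G1 G2 S t -> typ_mem G1 G2 S' t) ->
  (forall G1 G2 t, typ_sys G1 G2 P t -> typ_sys G1 G2 P' t) ->
  forall G1 G2 t, typ_sys G1 G2 (SComp S P) t -> typ_sys G1 G2 (SComp S' P') t.
Proof.
  intros hS hP G1 G2 t h.
  destruct (typ_cell_inv _ _ _ _ _ h)
    as (G & G3 & D2 & t1 & s & h1 & h2 & c1 & c2 & c3 & c4 & c5 & c6 & -> & ->).
  eapply typ_cell; eauto.
Qed.

Lemma typ_pinch_congr {Pp Pap} n (P P' : sys Pp Pap) :
  (has_act P <-> has_act P') ->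
  (forall G1 G2 t, typ_sys G1 G2 P t -> typ_sys G1 G2 P' t) ->
  forall G1 G2 t, typ_sys G1 G2 (SPinch n P) t -> typ_sys G1 G2 (SPinch n P') t.
Proof.
  intros ha hP G1 G2 t h.
  destruct (typ_pinch_inv _ _ _ _ _ h) as (H1 & h1 & na & b1 & b2 & -> & ->).
  eapply typ_pinch; eauto. rewrite no_act_iff in *. tauto.
Qed.

Lemma typ_fuse_congr {Pp Pap} n S S' (P P' : sys Pp Pap) :
  (has_act (SComp S P) <-> has_act (SComp S' P')) ->
  (forall G1 G2 t, typ_sys G1 G2 (SComp S P) t -> typ_sys G1 G2 (SComp S' P') t) ->
  forall G1 G2 t, typ_sys G1 G2 (SFuse n S P) t -> typ_sys G1 G2 (SFuse n S' P') t.
Proof.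
  intros ha hP G1 G2 t h.
  destruct (typ_fuse_inv _ _ _ _ _ _ h) as (H1 & h1 & na & b1 & b2 & -> & ->).
  eapply typ_fuse; eauto. rewrite no_act_iff in *. tauto.
Qed.

(** * Scope extrusion and alpha-conversion *)

Lemma typ_nu_nil {Pp Pap} n G1 G2 t :
  typ_sys G1 G2 (SNu n (@SNil Pp Pap)) t <-> typ_sys G1 G2 (@SNil Pp Pap) t.
Proof.
  rewrite typ_sys_nil_iff. split.
  - intro h.
    destruct (typ_nu_inv _ _ _ _ _ h) as [(G2' & h1 & _ & _ & ->)|(k & _ & h1 & _)].
    + apply typ_sys_nil_iff in h1 as (-> & -> & ->). splits; auto.
      apply seteq_eq. unfold_sets; tauto.
    + apply typ_sys_nil_iff in h1 as (_ & e & _). exfalso.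
      apply (proj1 (eq_set_iff _ _ e n)). right; reflexivity.
  - intros (-> & -> & ->). eapply typ_nu_prot; [apply typ_sys_nil_iff; auto|..]; unfold_sets; tauto.
Qed.

Lemma typ_nu_swap {Pp Pap} n m (P : sys Pp Pap) G1 G2 t : n <> m ->
  typ_sys G1 G2 (SNu n (SNu m P)) t -> typ_sys G1 G2 (SNu m (SNu n P)) t.
Proof.
  intros nm h.
  destruct (typ_nu_inv _ _ _ _ _ h) as [(G2' & h1 & a1 & a2 & ->)|(k & hk & h1 & a1 & a2 & a3)].
  - destruct (typ_nu_inv _ _ _ _ _ h1) as [(G2'' & h2 & b1 & b2 & ->)|(k & hk & h2 & b1 & b2 & b3)].
    + eapply typ_nu_prot; [eapply typ_nu_prot; [exact h2|auto|auto|apply seteq_refl]|auto|auto|].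
      intro y. unfold remove. tauto.
    + eapply typ_nu_action; [exact hk|eapply typ_nu_prot; [exact h2|auto| |apply seteq_refl]
                            |apply seteq_refl|apply seteq_refl| | |].
      * intros a [ta|na]; auto. rewrite (act_pair_snd _ _ _ na). congruence.
      * unfold_sets. intuition congruence.
      * unfold remove. tauto.
      * auto.
      * auto.
  - destruct (typ_nu_inv _ _ _ _ _ h1) as [(Y & h2 & b1 & b2 & e)|(k' & hk' & h2 & b1 & b2 & b3)].
    + assert (Yn : Y n) by (apply (proj1 (eq_set_iff _ _ e n)); right; reflexivity).
      eapply typ_nu_prot.
      * eapply typ_nu_action with (G2 := remove Y n); [exact hk|exact h2|..|auto|auto].
        -- intro y. unfold_sets. destruct (Nat.eq_dec y n); intuition congruence.
        -- apply seteq_refl.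
        -- unfold remove; tauto.
      * auto.
      * intros a ta. apply b2. left. auto.
      * intro y. pose proof (eq_set_iff _ _ e y) as E. unfold_sets.
        destruct (Nat.eq_dec y n); intuition congruence.
    + eapply typ_nu_action with (G2' := union G2 (single m)) (t' := union t (act_pair k' m));
        [exact hk'|eapply typ_nu_action; [exact hk|exact h2|..]
        |apply seteq_refl|apply seteq_refl|..].
      * intro y. unfold_sets. tauto.
      * intro y. unfold union. tauto.
      * unfold_sets. intuition congruence.
      * intros [ta|na]; auto. apply act_pair_snd in na. simpl in na. auto.
      * intros [ta|na]; auto. apply act_pair_snd in na. simpl in na. auto.
      * unfold_sets. tauto.
      * intro. apply b2. left. auto.
      * intro. apply b3. left. auto.
Qed.

Lemma par_rel_covers x1 x2 tx y1 y2 ty z1 z2 tz : par_rel x1 x2 tx y1 y2 ty z1 z2 tz ->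
  (forall v, z1 v -> x1 v \/ y1 v) /\ (forall v, z2 v -> x2 v \/ y2 v \/ y1 v) /\
  (forall a, tz a -> tx a \/ ty a).
Proof.
  intros (G1 & G & D1 & -> & -> & _ & _ & _ & _ & _ & _ & _ & _ & -> & -> & ->).
  unfold union. splits; intros; tauto.
Qed.

Lemma par_rel_inherits x1 x2 tx y1 y2 ty z1 z2 tz : par_rel x1 x2 tx y1 y2 ty z1 z2 tz ->
  (forall v, x1 v -> ~ y1 v -> z1 v) /\ (forall a, tx a -> tz a).
Proof.
  intros (G1 & G & D1 & -> & -> & _ & _ & _ & _ & _ & _ & _ & _ & -> & -> & ->).
  unfold union. split; intros; tauto.
Qed.

Lemma par_rel_remove x1 x2 tx y1 y2 ty z1 z2 tz n :
  par_rel x1 x2 tx y1 y2 ty z1 z2 tz -> ~ y1 n -> ~ y2 n ->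
  par_rel x1 (remove x2 n) tx y1 y2 ty z1 (remove z2 n) tz.
Proof.
  intros (G1 & G & D1 & -> & -> & d1 & d2 & oe & ot & d3 & d4 & d5 & d6 & -> & -> & ->) n1 n2.
  exists G1, G, D1. splits; auto; try pointwise.
  apply seteq_eq. intro v. unfold_sets. destruct (Nat.eq_dec v n); subst; intuition congruence.
Qed.

Lemma par_rel_remove_inv x1 x2 tx y1 y2 ty z1 z2 tz n :
  par_rel x1 (remove x2 n) tx y1 y2 ty z1 z2 tz -> ~ y1 n -> ~ y2 n ->
  exists z2', par_rel x1 x2 tx y1 y2 ty z1 z2' tz /\ z2 = remove z2' n.
Proof.
  intros (G1 & G & D1 & -> & -> & d1 & d2 & oe & ot & d3 & d4 & d5 & d6 & -> & -> & ->) n1 n2.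
  exists (union x2 (union y2 G)). split.
  - exists G1, G, D1. unfold_sets. splits; auto; intros v h1 h2;
      (destruct (Nat.eq_dec v n) as [->|ne]; [tauto|]);
      first [apply (oe v); tauto | apply (d4 v); tauto | apply (d5 v); tauto].
  - apply seteq_eq. intro v. unfold_sets. destruct (Nat.eq_dec v n); subst; intuition congruence.
Qed.

Lemma par_rel_bind x1 x2 tx y1 y2 ty z1 z2 tz n k :
  par_rel x1 x2 tx y1 y2 ty z1 (union z2 (single n)) (union tz (act_pair k n)) ->
  ~ y1 n -> ~ y2 n -> (forall a, ty a -> snd a <> n) ->
  ~ z2 n -> ~ tz (k, n) -> ~ tz (dual (k, n)) ->
  exists X tP, x2 = union X (single n) /\ tx = union tP (act_pair k n) /\ ~ X n /\
    ~ tP (k, n) /\ ~ tP (dual (k, n)) /\ par_rel x1 X tP y1 y2 ty z1 z2 tz.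
Proof.
  intros (G1 & G & D1 & -> & -> & d1 & d2 & oe & ot & d3 & d4 & d5 & d6 & -> & e4 & e5)
    n1 n2 n3 n4 n5 n6.
  assert (pair_tx : forall a, act_pair k n a -> tx a).
  { intros a na. destruct (proj1 (eq_set_iff _ _ e5 a) (or_intror na)); auto.
    exfalso. exact (n3 a ltac:(assumption) (act_pair_snd _ _ _ na)). }
  assert (pair_tz : forall a, act_pair k n a -> ~ tz a).
  { intros a [-> | ->]; auto. }
  assert (xn : x2 n).
  { destruct (proj1 (eq_set_iff _ _ e4 n) (or_intror eq_refl)) as [|[|]];
      unfold union in *; tauto. }
  exists (remove x2 n), (fun a => tx a /\ ~ act_pair k n a). splits.
  - symmetry. apply union_remove_single, xn.
  - symmetry. apply union_remove_act_pair, pair_tx.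
  - unfold remove. tauto.
  - intros [_ h]. apply h, act_pair_l.
  - intros [_ h]. apply h, act_pair_r.
  - exists G1, G, D1. splits; auto; try (unfold remove; pointwise).
    + intros [k' v]. pose proof (ot (k', v)) as O. unfold perp, restr in *. cbn in *. split.
      * intros [[h1 h2] h3]. apply O. auto.
      * intros [h1 h2]. destruct (proj2 O (conj h1 h2)) as [h4 h5]. splits; auto.
        intros na. apply act_pair_snd in na. cbn in na. subst. unfold union in *. tauto.
    + apply seteq_eq. intro v. pose proof (eq_set_iff _ _ e4 v) as E4. unfold_sets.
      destruct (Nat.eq_dec v n); subst; intuition congruence.
    + apply seteq_eq. intro a. pose proof (eq_set_iff _ _ e5 a) as E5. unfold union in *. split.
      * intro h. destruct (proj1 E5 (or_introl h)) as [h'|h']; auto.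
        left. split; auto. intro na. exact (pair_tz a na h).
      * intros [[h1 h2]|h1].
        -- destruct (proj2 E5 (or_introl h1)); tauto.
        -- destruct (proj2 E5 (or_intror h1)) as [h|h]; auto.
           exfalso. exact (n3 a h1 (act_pair_snd _ _ _ h)).
Qed.

Lemma par_rel_unbind x1 X tP y1 y2 ty z1 z2 tz n k :
  par_rel x1 X tP y1 y2 ty z1 z2 tz -> ~ y1 n -> ~ y2 n -> ~ X n ->
  par_rel x1 (union X (single n)) (union tP (act_pair k n)) y1 y2 ty
    z1 (union z2 (single n)) (union tz (act_pair k n)).
Proof.
  intros (G1 & G & D1 & -> & -> & d1 & d2 & oe & ot & d3 & d4 & d5 & d6 & -> & -> & ->) n1 n2 n4.
  exists G1, G, D1. splits; auto; try pointwise.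
  - unfold ok_e, disj in *. intros v h1 h2. unfold union, single in *.
    destruct h1 as [h|[h|h]]; [apply (oe v)|apply (oe v)|subst; tauto]; auto.
  - intros [k' v]. pose proof (ot (k', v)) as O. unfold perp, restr, union, act_pair, single in *.
    cbn in O |- *. split.
    + intros [[h1|[h1|h1]] h2]; [apply O; auto| |]; inversion h1; subst;
        exfalso; apply n1; right; auto.
    + intros [h1 h2]. destruct (proj2 O (conj h1 h2)). auto.
  - intros v h1 h2. unfold union, single in *.
    destruct h1 as [h|h]; [apply (d4 v)|subst; tauto]; auto.
  - intros v h1 h2. unfold union, single in *.
    destruct h1 as [h|h]; [apply (d5 v)|subst; tauto]; auto.
Qed.

Lemma typ_nu_par {Pp Pap} n (P Q : sys Pp Pap) G1 G2 t : ~ sys_fn Q n ->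
  typ_sys G1 G2 (SNu n (SPar P Q)) t -> typ_sys G1 G2 (SPar (SNu n P) Q) t.
Proof.
  intros nf h. rewrite typ_sys_par_iff.
  destruct (typ_nu_inv _ _ _ _ _ h) as [(G2' & h1 & a1 & a2 & ->)|(k & hk & h1 & a1 & a2 & a3)];
    rewrite typ_sys_par_iff in h1; destruct h1 as (x1 & x2 & tx & y1 & y2 & ty & hP & hQ & p);
    destruct (typ_sys_fresh _ _ _ _ _ hQ nf) as (b1 & b2 & b3).
  - destruct (par_rel_inherits _ _ _ _ _ _ _ _ _ p) as (inh1 & inh2).
    exists x1, (remove x2 n), tx, y1, y2, ty. splits; auto using par_rel_remove.
    eapply typ_nu_prot; [exact hP|intro; apply a1; auto|intros a ta; apply a2; auto|auto].
  - destruct (par_rel_bind _ _ _ _ _ _ _ _ _ _ _ p b1 b2 b3 a1 a2 a3)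
      as (X & tP & -> & -> & c1 & c2 & c3 & p').
    exists x1, X, tP, y1, y2, ty. splits; auto.
    eapply typ_nu_action; eauto.
Qed.

Lemma typ_par_nu {Pp Pap} n (P Q : sys Pp Pap) G1 G2 t : ~ sys_fn Q n ->
  typ_sys G1 G2 (SPar (SNu n P) Q) t -> typ_sys G1 G2 (SNu n (SPar P Q)) t.
Proof.
  intros nf h. rewrite typ_sys_par_iff in h.
  destruct h as (x1 & x2 & tx & y1 & y2 & ty & hP & hQ & p).
  destruct (typ_sys_fresh _ _ _ _ _ hQ nf) as (b1 & b2 & b3).
  destruct (typ_nu_inv _ _ _ _ _ hP) as [(X & h1 & a1 & a2 & ->)|(k & hk & h1 & a1 & a2 & a3)].
  - destruct (par_rel_remove_inv _ _ _ _ _ _ _ _ _ _ p b1 b2) as (z2' & p' & ->).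
    destruct (par_rel_covers _ _ _ _ _ _ _ _ _ p') as (f1 & _ & f3).
    eapply typ_nu_prot; [rewrite typ_sys_par_iff; exists x1, X, tx, y1, y2, ty; eauto| | |auto].
    + intro h0. destruct (f1 n h0); auto.
    + intros a ta. destruct (f3 a ta); auto.
  - destruct (par_rel_covers _ _ _ _ _ _ _ _ _ p) as (_ & f2 & f3).
    eapply typ_nu_action; [exact hk|rewrite typ_sys_par_iff|apply seteq_refl|apply seteq_refl|..].
    + exists x1, (union x2 (single n)), (union tx (act_pair k n)), y1, y2, ty.
      splits; auto using par_rel_unbind.
    + intro h0. destruct (f2 n h0) as [?|[?|?]]; auto.
    + intro h0. destruct (f3 _ h0) as [h'|h']; auto. exact (b3 _ h' eq_refl).
    + intro h0. destruct (f3 _ h0) as [h'|h']; auto. exact (b3 _ h' eq_refl).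
Qed.

Lemma typ_nu_cell {Pp Pap} n S (P : sys Pp Pap) C1 C2 U : ~ mem_fn S n ->
  typ_sys C1 C2 (SNu n (SComp S P)) U -> typ_sys C1 C2 (SComp S (SNu n P)) U.
Proof.
  intros nf h.
  destruct (typ_nu_inv _ _ _ _ _ h) as [(C2' & h1 & a1 & a2 & ->)|(k & hk & h1 & a1 & a2 & a3)];
    destruct (typ_cell_inv _ _ _ _ _ h1)
      as (G & G2 & D2 & t & s & hS & hP & c1 & c2 & c3 & c4 & c5 & c6 & e1 & e2);
    destruct (typ_mem_fresh _ _ _ _ _ hS nf) as (b1 & b2 & b3).
  - subst. eapply typ_cell with (D2 := remove D2 n);
      eauto using ok_e_remove, disj_remove_l, disj_remove_r.
    + eapply typ_nu_prot;
        [exact hP|intro; apply b1; right; auto|intros a sa; apply a2; right; auto|auto].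
    + intro v. unfold_sets. destruct (Nat.eq_dec v n); subst; intuition congruence.
  - assert (Dn : D2 n).
    { pose proof (eq_set_iff _ _ e1 n) as E. unfold_sets. intuition. }
    assert (pair_s : forall a, act_pair k n a -> s a).
    { intros a na. destruct (proj1 (eq_set_iff _ _ e2 a) (or_intror na)); auto.
      exfalso. exact (b3 a ltac:(assumption) (act_pair_snd _ _ _ na)). }
    eapply typ_cell with (D2 := remove D2 n) (s := fun a => s a /\ ~ act_pair k n a);
      eauto using ok_e_remove, disj_remove_l, disj_remove_r.
    + eapply typ_nu_action with (k := k); [exact hk|exact hP|..].
      * rewrite (union_remove_single _ _ Dn). apply seteq_refl.
      * rewrite (union_remove_act_pair _ _ _ pair_s). apply seteq_refl.
      * unfold remove. tauto.
      * intros [_ h0]. apply h0, act_pair_l.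
      * intros [_ h0]. apply h0, act_pair_r.
    + intros [k' v]. pose proof (c3 (k', v)) as O. unfold perp, restr in *. cbn in *. split.
      * intros h0. destruct (proj1 O h0). splits; auto.
        intro na. apply act_pair_snd in na. cbn in na. subst. unfold union in b1. tauto.
      * intros [[h0 h0'] h0'']. apply O. auto.
    + intro v. pose proof (eq_set_iff _ _ e1 v) as E. unfold_sets.
      destruct (Nat.eq_dec v n); subst; intuition congruence.
    + intro a. pose proof (eq_set_iff _ _ e2 a) as E. unfold union in *. split.
      * intro h0. destruct (proj1 E (or_introl h0)); auto. right. split; auto.
        intros [h'|h']; unfold single in h'; subst; auto.
      * intros [h0|[h0 h0']];
          [destruct (proj2 E (or_introl h0)) as [h'|h']
          |destruct (proj2 E (or_intror h0)) as [h'|h']];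
          auto; try contradiction.
        exfalso. exact (b3 a h0 (act_pair_snd _ _ _ h')).
Qed.

Lemma typ_cell_nu {Pp Pap} n S (P : sys Pp Pap) C1 C2 U : ~ mem_fn S n ->
  typ_sys C1 C2 (SComp S (SNu n P)) U -> typ_sys C1 C2 (SNu n (SComp S P)) U.
Proof.
  intros nf h.
  destruct (typ_cell_inv _ _ _ _ _ h)
    as (G & G2 & D2 & t & s & hS & hnP & c1 & c2 & c3 & c4 & c5 & c6 & -> & ->).
  destruct (typ_mem_fresh _ _ _ _ _ hS nf) as (b1 & b2 & b3).
  assert (Gn : ~ G n) by (intro; apply b1; right; auto).
  assert (Cn : ~ C1 n) by (intro; apply b1; left; auto).
  destruct (typ_nu_inv _ _ _ _ _ hnP) as [(Y & hP & a1 & a2 & ->)|(k & hk & hP & a1 & a2 & a3)].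
  - eapply typ_nu_prot with (G2' := union G2 (union Y G));
      [eapply typ_cell; [exact hS|exact hP|exact c1| |exact c3| |exact c5| |auto|auto]|auto| |].
    + unfold_sets. intros v h1' h2'.
      destruct (Nat.eq_dec v n); subst; [tauto|]. apply (c2 v); tauto.
    + unfold_sets. intros v h1' h2'.
      destruct (Nat.eq_dec v n); subst; [tauto|]. apply (c4 v); tauto.
    + unfold_sets. intros v h1' h2'.
      destruct (Nat.eq_dec v n); subst; [tauto|]. apply (c6 v); tauto.
    + intros a [ta|sa]; auto.
    + intro v. unfold_sets. destruct (Nat.eq_dec v n); subst; intuition congruence.
  - eapply typ_nu_action with (k := k) (G2' := union G2 (union (union D2 (single n)) G))
      (t' := union t (union s (act_pair k n)));
      [exact hk|eapply typ_cell; [exact hS|exact hP|exact c1| | | |exact c5| |auto|auto]|..].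
    + unfold_sets. intros v h1' h2'.
      destruct (Nat.eq_dec v n); subst; [tauto|]. apply (c2 v); tauto.
    + intros [k' v]. pose proof (c3 (k', v)) as O. unfold perp, restr, union in *. cbn in *. split.
      * intros h0. destruct (proj1 O h0). auto.
      * intros [[h0|h0] h0']; [apply O; auto|].
        apply act_pair_snd in h0. cbn in h0. subst. tauto.
    + unfold_sets. intros v h1' [h2'|h2']; [apply (c4 v); auto|subst; tauto].
    + unfold_sets. intros v [h1'|h1'] h2'; [apply (c6 v); auto|subst; tauto].
    + intro v. unfold union. tauto.
    + intro a. unfold union. tauto.
    + unfold union. intros [h0|[h0|h0]]; auto.
    + unfold union. intros [h0|h0]; [apply (b3 _ h0)|]; auto.
    + unfold union. intros [h0|h0]; [apply (b3 _ h0)|]; auto.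
Qed.

Lemma typ_nu_pinch {Pp Pap} n m (P : sys Pp Pap) G1 G2 t : n <> m ->
  typ_sys G1 G2 (SNu n (SPinch m P)) t -> typ_sys G1 G2 (SPinch m (SNu n P)) t.
Proof.
  intros nm h.
  destruct (typ_nu_inv _ _ _ _ _ h) as [(G2' & h1 & a1 & a2 & ->)|(k & hk & h1 & a1 & a2 & a3)];
    destruct (typ_pinch_inv _ _ _ _ _ h1) as (H1 & hP & na & b1 & b2 & e1 & e2).
  - subst.
    eapply typ_pinch; [eapply typ_nu_prot; [exact hP| | |auto]|exact na|exact b1|..|auto|auto].
    + intro. apply a1. left. auto.
    + intros a [].
    + unfold remove. tauto.
  - exfalso. pose proof (eq_set_iff _ _ e2 (k, n)) as E.
    assert (e : (k, n) = (Kp, m)) by (apply E; right; apply act_pair_l).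
    injection e. auto.
Qed.

Lemma typ_pinch_nu {Pp Pap} n m (P : sys Pp Pap) G1 G2 t : n <> m ->
  typ_sys G1 G2 (SPinch m (SNu n P)) t -> typ_sys G1 G2 (SNu n (SPinch m P)) t.
Proof.
  intros nm h. destruct (typ_pinch_inv _ _ _ _ _ h) as (H1 & hnP & na & b1 & b2 & -> & ->).
  destruct (typ_nu_inv _ _ _ _ _ hnP) as [(Y & hP & a1 & a2 & ->)|(k & hk & hP & a1 & a2 & a3)].
  - eapply typ_nu_prot; [eapply typ_pinch; [exact hP|exact na|exact b1|..|auto|auto]|..|auto].
    + intro. apply b2. split; auto.
    + unfold_sets. intros [h'|h']; auto.
    + intros a ->. simpl. auto.
  - exfalso. apply (na (k, n)). simpl. apply (typ_sys_act _ _ _ _ _ hP). right. apply act_pair_l.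
Qed.

Lemma typ_nu_fuse {Pp Pap} n m S (P : sys Pp Pap) G1 G2 t : n <> m -> ~ mem_fn S n ->
  typ_sys G1 G2 (SNu n (SFuse m S P)) t -> typ_sys G1 G2 (SFuse m S (SNu n P)) t.
Proof.
  intros nm nf h.
  destruct (typ_nu_inv _ _ _ _ _ h) as [(G2' & h1 & a1 & a2 & ->)|(k & hk & h1 & a1 & a2 & a3)];
    destruct (typ_fuse_inv _ _ _ _ _ _ h1) as (H1 & hP & na & b1 & b2 & e1 & e2).
  - subst. eapply typ_fuse;
      [apply typ_nu_cell; [exact nf|eapply typ_nu_prot; [exact hP| | |auto]]
      |..|exact b1| |auto|auto].
    + intro. apply a1. left. auto.
    + intros a [].
    + exact na.
    + unfold remove. tauto.
  - exfalso. pose proof (eq_set_iff _ _ e2 (k, n)) as E.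
    assert (e : (k, n) = (Kf, m)) by (apply E; right; apply act_pair_l).
    injection e. auto.
Qed.

Lemma typ_fuse_nu {Pp Pap} n m S (P : sys Pp Pap) G1 G2 t : n <> m -> ~ mem_fn S n ->
  typ_sys G1 G2 (SFuse m S (SNu n P)) t -> typ_sys G1 G2 (SNu n (SFuse m S P)) t.
Proof.
  intros nm nf h. destruct (typ_fuse_inv _ _ _ _ _ _ h) as (H1 & hnP & na & b1 & b2 & -> & ->).
  apply typ_cell_nu in hnP; [|exact nf].
  destruct (typ_nu_inv _ _ _ _ _ hnP) as [(Y & hP & a1 & a2 & ->)|(k & hk & hP & a1 & a2 & a3)].
  - eapply typ_nu_prot; [eapply typ_fuse; [exact hP| |exact b1| |auto|auto]|..|auto].
    + exact na.
    + intro. apply b2. split; auto.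
    + unfold_sets. intros [h'|h']; auto.
    + intros a ->. simpl. auto.
  - exfalso. apply (na (k, n)). apply (typ_sys_act _ _ _ _ _ hP). right. apply act_pair_l.
Qed.

Lemma typ_nu_rename {Pp Pap} n m (P : sys Pp Pap) G1 G2 t : ~ sys_fn (SNu n P) m ->
  typ_sys G1 G2 (SNu n P) t -> typ_sys G1 G2 (SNu m (swap_sys n m P)) t.
Proof.
  intros nf h. destruct (Nat.eq_dec n m) as [<-|nm]; [rewrite swap_sys_id; exact h|].
  assert (nf' : ~ sys_fn P m) by (intro; apply nf; simpl; split; auto).
  destruct (typ_nu_inv _ _ _ _ _ h) as [(G2' & hP & a1 & a2 & ->)|(k & hk & hP & a1 & a2 & a3)];
    destruct (typ_sys_fresh _ _ _ _ _ hP nf') as (b1 & b2 & b3);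
    pose proof (typ_sys_swap n m _ _ _ _ hP) as hs.
  - rewrite (swap_nset_fresh _ _ _ a1 b1), (swap_tset_fresh _ _ _ a2 b3) in hs.
    eapply typ_nu_prot; [exact hs|exact b1|exact b3|].
    intro v. unfold swap_nset, remove.
    destruct (Nat.eq_dec v n) as [->|]; [rewrite swapn_l; tauto|].
    destruct (Nat.eq_dec v m) as [->|]; [rewrite swapn_r; tauto|].
    rewrite swapn_other; tauto.
  - destruct (typ_sys_wf _ _ _ _ hP) as [I _].
    pose proof (wf_judgement_act_pair_fresh _ _ _ _ _ I a2 a3) as tn.
    assert (G1n : ~ G1 n) by (intro; apply (proj1 I n); auto; right; reflexivity).
    change (typ_sys (swap_nset n m G1) (union (swap_nset n m G2) (swap_nset n m (single n)))
              (swap_sys n m P) (union (swap_tset n m t) (swap_tset n m (act_pair k n)))) in hs.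
    rewrite (swap_nset_fresh _ _ _ G1n b1), swap_nset_single, swapn_l, swap_tset_act_pair,
      (swap_nset_fresh _ _ _ a1 (fun h => b2 (or_introl h))),
      (swap_tset_fresh _ _ _ tn (fun a h => b3 a (or_introl h))) in hs.
    eapply typ_nu_action; [exact hk|exact hs|apply seteq_refl|apply seteq_refl|..].
    + intro. apply b2. left. auto.
    + intro h'. exact (b3 _ (or_introl h') eq_refl).
    + intro h'. exact (b3 _ (or_introl h') eq_refl).
Qed.

Lemma typ_nu_rename_iff {Pp Pap} n m (P : sys Pp Pap) G1 G2 t : ~ sys_fn (SNu n P) m ->
  typ_sys G1 G2 (SNu n P) t <-> typ_sys G1 G2 (SNu m (swap_sys n m P)) t.
Proof.
  intros nf. split; [apply typ_nu_rename; auto|].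
  intro h. destruct (Nat.eq_dec n m) as [<-|nm]; [rewrite swap_sys_id in h; exact h|].
  apply (typ_nu_rename m n) in h.
  - rewrite swap_sys_cancel in h. exact h.
  - simpl. rewrite sys_fn_swap, swapn_l. intros [_ h']. apply nf. simpl. split; auto.
Qed.

(** * Structural equivalence *)

(* The prefix rules require [act(K) = emp], so an equivalence must also preserve the
   existence of actions; their names may change under alpha-conversion. *)
Definition sys_typ_equiv {Pp Pap} (P Q : sys Pp Pap) : Prop :=
  (has_act P <-> has_act Q) /\
  (forall G1 G2 t, typ_sys G1 G2 P t <-> typ_sys G1 G2 Q t).

Lemma sys_typ_equiv_refl {Pp Pap} (P : sys Pp Pap) : sys_typ_equiv P P.
Proof. split; intros; reflexivity. Qed.

Lemma sys_typ_equiv_sym {Pp Pap} (P Q : sys Pp Pap) : sys_typ_equiv P Q -> sys_typ_equiv Q P.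
Proof. intros [h1 h2]. split; [tauto|]. intros. rewrite h2. reflexivity. Qed.

Lemma sys_typ_equiv_trans {Pp Pap} (P Q R : sys Pp Pap) :
  sys_typ_equiv P Q -> sys_typ_equiv Q R -> sys_typ_equiv P R.
Proof. intros [h1 h2] [h3 h4]. split; [tauto|]. intros. rewrite h2. auto. Qed.

Lemma sys_typ_equiv_par_l {Pp Pap} (P P' Q : sys Pp Pap) :
  sys_typ_equiv P P' -> sys_typ_equiv (SPar P Q) (SPar P' Q).
Proof.
  intros [ha ht]. split; [unfold has_act in *; simpl; firstorder|].
  split; apply (typ_par_congr _ _ _ (@typ_sys_par_iff Pp Pap)); intros; apply ht; auto.
Qed.

Lemma sys_typ_equiv_par_r {Pp Pap} (P Q Q' : sys Pp Pap) :
  sys_typ_equiv Q Q' -> sys_typ_equiv (SPar P Q) (SPar P Q').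
Proof.
  intro h.
  assert (comm : forall R S : sys Pp Pap, sys_typ_equiv (SPar R S) (SPar S R)).
  { split; [unfold has_act; simpl; firstorder|].
    split; apply (typ_par_comm _ _ _ (@typ_sys_par_iff Pp Pap)). }
  eapply sys_typ_equiv_trans; [apply comm|].
  eapply sys_typ_equiv_trans; [apply sys_typ_equiv_par_l, h|apply comm].
Qed.

Lemma sys_typ_equiv_nu {Pp Pap} n (P P' : sys Pp Pap) :
  sys_typ_equiv P P' -> sys_typ_equiv (SNu n P) (SNu n P').
Proof.
  intros [ha ht]. split; [unfold has_act in *; simpl; firstorder|].
  split; apply typ_nu_congr; intros; apply ht; auto.
Qed.

Lemma sys_typ_equiv_cell {Pp Pap} (S S' : mem Pap) (P P' : sys Pp Pap) :
  (forall a, act_mem S a <-> act_mem S' a) ->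
  (forall G1 G2 t, typ_mem G1 G2 S t <-> typ_mem G1 G2 S' t) ->
  sys_typ_equiv P P' -> sys_typ_equiv (SComp S P) (SComp S' P').
Proof.
  intros ma mt [ha ht]. split.
  - unfold has_act in *. simpl. split; intros [a [h|h]].
    + exists a. left. apply ma, h.
    + destruct (proj1 ha (ex_intro _ a h)) as [b hb]. exists b. auto.
    + exists a. left. apply ma, h.
    + destruct (proj2 ha (ex_intro _ a h)) as [b hb]. exists b. auto.
  - split; apply typ_cell_congr; intros; try apply mt; try apply ht; auto.
Qed.

Lemma sys_typ_equiv_pinch {Pp Pap} n (P P' : sys Pp Pap) :
  sys_typ_equiv P P' -> sys_typ_equiv (SPinch n P) (SPinch n P').
Proof.
  intros [ha ht]. split; [split; intros; exists (Kp, n); simpl; auto|].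
  split; apply typ_pinch_congr; try tauto; intros; apply ht; auto.
Qed.

Lemma sys_typ_equiv_fuse {Pp Pap} n S S' (P P' : sys Pp Pap) :
  sys_typ_equiv (SComp S P) (SComp S' P') -> sys_typ_equiv (SFuse n S P) (SFuse n S' P').
Proof.
  intros [ha ht]. split; [split; intros; exists (Kf, n); simpl; auto|].
  split; apply typ_fuse_congr; try tauto; intros; apply ht; auto.
Qed.

Lemma alpha_sys_typ_equiv {Pp Pap} (P Q : sys Pp Pap) : alpha_sys P Q -> sys_typ_equiv P Q.
Proof.
  induction 1.
  - apply sys_typ_equiv_refl.
  - apply sys_typ_equiv_sym; auto.
  - eapply sys_typ_equiv_trans; eauto.
  - split; [|intros; apply typ_nu_rename_iff; auto].
    unfold has_act. simpl. split; intros [[k v] h'].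
    + exists (k, swapn n m v). rewrite act_sys_swap, swapn_involutive. exact h'.
    + rewrite act_sys_swap in h'. eexists; eauto.
  - apply sys_typ_equiv_cell; auto; intros; reflexivity.
  - apply sys_typ_equiv_par_l; auto.
  - apply sys_typ_equiv_par_r; auto.
  - apply sys_typ_equiv_nu; auto.
  - apply sys_typ_equiv_pinch; auto.
  - apply sys_typ_equiv_fuse, sys_typ_equiv_cell; auto; intros; reflexivity.
Qed.

Lemma sys_typ_equiv_same_acts {Pp Pap} (P Q : sys Pp Pap) :
  (forall a, act_sys P a <-> act_sys Q a) ->
  (forall G1 G2 t, typ_sys G1 G2 P t <-> typ_sys G1 G2 Q t) -> sys_typ_equiv P Q.
Proof. intros ha ht. split; [unfold has_act; firstorder|exact ht]. Qed.

Ltac same_acts := apply sys_typ_equiv_same_acts; [intro; simpl; tauto|intros ? ? ?].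

Lemma sequiv_sys_typ_equiv {Pp Pap} (P Q : sys Pp Pap) : sequiv P Q -> sys_typ_equiv P Q.
Proof.
  induction 1.
  - apply sys_typ_equiv_refl.
  - apply sys_typ_equiv_sym; auto.
  - eapply sys_typ_equiv_trans; eauto.
  - apply alpha_sys_typ_equiv; auto.
  - same_acts. split; apply (typ_par_comm _ _ _ (@typ_sys_par_iff Pp Pap)).
  - same_acts.
    split; [apply (typ_par_assoc _ _ _ (@typ_sys_par_iff Pp Pap) (@typ_sys_wf_judgement Pp Pap))
           |apply (typ_par_assoc_rev _ _ _ (@typ_sys_par_iff Pp Pap)
                    (@typ_sys_wf_judgement Pp Pap))].
  - same_acts. apply (typ_par_nil _ _ _ _ (@typ_sys_par_iff Pp Pap) (@typ_sys_nil_iff Pp Pap)).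
  - same_acts. split; apply typ_nu_swap; auto.
  - same_acts. apply typ_nu_nil.
  - same_acts. split; [apply typ_nu_par|apply typ_par_nu]; auto.
  - same_acts. split; [apply typ_nu_cell|apply typ_cell_nu]; auto.
  - same_acts. split; [apply typ_nu_pinch|apply typ_pinch_nu]; auto.
  - same_acts. split; [apply typ_nu_fuse|apply typ_fuse_nu]; auto.
  - apply sys_typ_equiv_par_l; auto.
  - apply sys_typ_equiv_par_r; auto.
  - destruct (mequiv_typ _ _ H). apply sys_typ_equiv_cell; auto.
  - apply sys_typ_equiv_pinch; auto.
  - apply sys_typ_equiv_fuse; auto.
Qed.

Theorem mainTheorem4 (Pp Pap : Type) (P Q : sys Pp Pap) (S T : mem Pap) :
  sequiv P Q -> mequiv S T ->
  (forall (G1 G2 : nset) (tau : tset), typ_sys G1 G2 P tau <-> typ_sys G1 G2 Q tau) /\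
  (forall (D1 D2 : nset) (sigma : tset), typ_mem D1 D2 S sigma <-> typ_mem D1 D2 T sigma).
Proof.
  intros hPQ hST. split.
  - apply (sequiv_sys_typ_equiv _ _ hPQ).
  - apply (mequiv_typ _ _ hST).
Qed.
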